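(* Let $D$ be a countable solid digraph, fix an enumeration $v_1,v_2,\dots$ of $V(D)$, and let $X_n=\{v_1,\dots,v_n\}$. Then $|D|$ is homeomorphic to the inverse limit $\varprojlim(D/P_{X_n})_{n\in\mathbb{N}}$ of the spaces $D/P_{X_n}$ with the bonding maps $f_{P_{X_m}P_{X_n}}$ for $n\le m$.
   Context: Digraphs have no loops and no parallel edges. $\mathcal{X}(D)$: finite subsets of $V(D)$. $D$ is solid if $D-X$ has only finitely many strong components for every $X\in\mathcal{X}(D)$. For $X\in\mathcal{X}(D)$ of a solid digraph, $P_X$ is the partition of $V(D)$ whose classes are the singletons $\{x\}$, $x\in X$, and the vertex sets of the strong components of $D-X$. For a finite partition $P$ of $V(D)$, $D/P$ is the finite multi-digraph on $P$ where for distinct $p_1,p_2\in P$ there is one edge $(e,p_1,p_2)$ per edge $e$ of $D$ from $p_1$ to $p_2$ if there are finitely many such edges, and a single quotient edge $(p_1p_2,p_1,p_2)$ if infinitely many; it carries the 1-complex topology. If $P'$ refines $P$, the map $f_{P'P}\colon D/P'\to D/P$ sends $p'$ to the class $p\supseteq p'$, sends an edge $(e',p_1',p_2')$ whose endpoints lie in one class $p$ entirely to $p$, and otherwise, with $p_1'\subseteq p_1\ne p_2\supseteq p_2'$, maps it pointwise onto the quotient edge from $p_1$ to $p_2$ if it exists and else onto $(e',p_1,p_2)$. Ends and limit edges: rays are one-way infinite directed paths, tails are subrays; a ray is solid if for each $X\in\mathcal{X}(D)$ it has a tail in a strong component of $D-X$; solid rays are equivalent if for each $X$ they have tails in the same strong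 component; classes are ends, $\Omega(D)$. $C(X,\omega)$: strong component of $D-X$ containing tails of rays of $\omega$ ($\omega$ lives in it); $X$ separates ends $\omega,\eta$ if $C(X,\omega)\ne C(X,\eta)$. For distinct ends, $(\omega,\eta)$ is a limit edge if for each $X$ separating them $D$ has an edge from $C(X,\omega)$ to $C(X,\eta)$; for a vertex $v$, $(v,\omega)$ (resp. $(\omega,v)$) is a limit edge if $D$ has an edge from $v$ to $C(X,\omega)$ (resp. from $C(X,\omega)$ to $v$) for all $X$ with $v\notin C(X,\omega)$. $\Lambda(D)$: limit edges. $|D|$: from $V(D)\cup\Omega(D)$ and copies $[0,1]_e$, $e\in E(D)\cup\Lambda(D)$, identify the tail of $e$ with $0$ and head with $1$; points on different edges correspond if they come from the same real. A limit edge lives in a strong component $C$ of $D-X$ if each endpoint is a vertex of or an end living in $C$. Topology generated by: (1) open $\varepsilon$-stars around vertices; (2) open subintervals of interiors of edges of $D$; (3) for an end $\omega$ and $X\in\mathcal{X}(D)$, $\hat C_\varepsilon(X,\omega)$: vertices and inner points of edges of $C(X,\omega)$, ends living in $C(X,\omega)$, points of limit edges living in $C(X,\omega)$, and for each edge of $E(D)\cup\Lambda(D)$ with exactly one endpoint $y$ a vertex of/end living in $C(X,\omega)$, the half-open segment of length $\varepsilon$ at $y$; (4) for an inner point $z$ of a limit edge $(\omega,\eta)$ and $X$ separating $\omega,\eta$: union of open $\varepsilon$-intervals around points corresponding to $z$ on all edges of $D$ from $C(X,\omega)$ to $C(X,\eta)$ and on limit edges with tail a vertex of/end living in $C(X,\omega)$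 and head a vertex of/end living in $C(X,\eta)$; for $(v,\omega)$ with $v\in X$ analogously over edges of $D$ from $v$ to $C(X,\omega)$ and limit edges $(v,\omega')$, $\omega'$ living in $C(X,\omega)$; symmetrically for $(\omega,v)$. *)

From Stdlib Require Import Reals List Classical ClassicalEpsilon.
Open Scope R_scope.

Definition topology (T : Type) := (T -> Prop) -> Prop.

Inductive generated {T : Type} (B : (T -> Prop) -> Prop) : (T -> Prop) -> Prop :=
| gen_base  : forall S, B S -> generated B S
| gen_full  : generated B (fun _ => True)
| gen_inter : forall U W, generated B U -> generated B W ->
                generated B (fun x => U x /\ W x)
| gen_union : forall (I : Type) (F : I -> T -> Prop),
                (forall i, generated B (F i)) ->
                generated B (fun x => exists i, F i x).

Definition continuous {A B : Type} (OA : topology A) (OB : topology B)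
  (f : A -> B) : Prop :=
  forall U, OB U -> OA (fun x => U (f x)).

Definition homeomorphic {A B : Type} (OA : topology A) (OB : topology B) : Prop :=
  exists (f : A -> B) (g : B -> A),
    (forall x, g (f x) = x) /\ (forall y, f (g y) = y) /\
    continuous OA OB f /\ continuous OB OA g.

Definition decide (P : Prop) : {P} + {~ P} := excluded_middle_informative P.

Section Digraph.
(* A digraph without loops and without parallel edges: vertex type V and
   edge relation E (an edge is determined by its tail and head). *)
Variable V : Type.
Variable E : V -> V -> Prop.

(* Finite vertex sets X in 𝒳(D) are represented by lists. *)

Inductive reach (X : list V) (u : V) : V -> Prop :=
| reach_refl : ~ In u X -> reach X u u
| reach_step : forall w z, reach X u w -> E w z -> ~ In z X -> reach X u z.

Definition sc (X : list V) (u w : V) : Prop := reach X u w /\ reach X w u.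

(* D is solid: D - X has finitely many strong components for each finite X. *)
Definition solid : Prop :=
  forall X : list V, exists reps : list V,
    forall y, ~ In y X -> exists u, In u reps /\ sc X u y.

Definition is_ray (r : nat -> V) : Prop :=
  (forall i j, r i = r j -> i = j) /\ (forall i, E (r i) (r (S i))).

Definition solid_ray (r : nat -> V) : Prop :=
  is_ray r /\
  forall X : list V, exists N, forall i j, (N <= i)%nat -> (N <= j)%nat -> sc X (r i) (r j).

Definition equiv_rays (r r' : nat -> V) : Prop :=
  forall X : list V, exists N, forall i j, (N <= i)%nat -> (N <= j)%nat -> sc X (r i) (r' j).

Definition is_end (w : (nat -> V) -> Prop) : Prop :=
  exists r, solid_ray r /\ forall r', w r' <-> (solid_ray r' /\ equiv_rays r r').

Definition C_of (X : list V) (w : (nat -> V) -> Prop) : V -> Prop :=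
  fun y => ~ In y X /\
    exists r, w r /\ exists N, forall i, (N <= i)%nat -> sc X y (r i).

Definition separates (X : list V) (w h : (nat -> V) -> Prop) : Prop :=
  ~ (forall y, C_of X w y <-> C_of X h y).

Inductive node := NV (v : V) | NE (w : (nat -> V) -> Prop).

Definition node_in (X : list V) (C : V -> Prop) (a : node) : Prop :=
  match a with
  | NV v => C v
  | NE h => is_end h /\ forall y, C_of X h y <-> C y
  end.

Definition limit_edge (a b : node) : Prop :=
  match a, b with
  | NE w, NE h => is_end w /\ is_end h /\ w <> h /\
      forall X : list V, separates X w h ->
        exists u z, C_of X w u /\ C_of X h z /\ E u z
  | NV v, NE w => is_end w /\
      forall X : list V, ~ C_of X w v -> exists z, C_of X w z /\ E v z
  | NE w, NV v => is_end w /\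
      forall X : list V, ~ C_of X w v -> exists z, C_of X w z /\ E z v
  | NV _, NV _ => False
  end.

(* Edges of E(D) ∪ Λ(D), identified by (tail, head). *)
Definition is_edge (a b : node) : Prop :=
  match a, b with
  | NV u, NV w => E u w
  | _, _ => limit_edge a b
  end.

(* DInner a b t is the point of [0,1]_e, e = (a,b), at 0 < t < 1;
   t = 0 and t = 1 are identified with the tail a and the head b. *)
Inductive DPt := DV (v : V) | DEnd (w : (nat -> V) -> Prop) | DInner (a b : node) (t : R).

Definition in_D (p : DPt) : Prop :=
  match p with
  | DV _ => True
  | DEnd w => is_end w
  | DInner a b t => is_edge a b /\ 0 < t < 1
  end.

Definition Dspace := { p : DPt | in_D p }.

Definition star_set (v : V) (eps : R) : DPt -> Prop :=
  fun p => p = DV v \/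
    exists a b t, p = DInner a b t /\
      ((a = NV v /\ t < eps) \/ (b = NV v /\ 1 - eps < t)).

Definition interval_set (u w : V) (lo hi : R) : DPt -> Prop :=
  fun p => exists t, p = DInner (NV u) (NV w) t /\ lo < t < hi.

Definition Chat_set (X : list V) (w : (nat -> V) -> Prop) (eps : R) : DPt -> Prop :=
  fun p =>
    let C := C_of X w in
    match p with
    | DV y => C y
    | DEnd h => node_in X C (NE h)
    | DInner a b t =>
        (node_in X C a /\ node_in X C b) \/
        (node_in X C a /\ ~ node_in X C b /\ t < eps) \/
        (~ node_in X C a /\ node_in X C b /\ 1 - eps < t)
    end.

(* (4) neighbourhoods of inner points of limit edges: the union of the open
   ε-intervals around t0 on all edges of E(D) ∪ Λ(D) whose tail is a node
   satisfying Ptail and whose head is a node satisfying Phead. *)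
Definition bundle_set (Ptail Phead : node -> Prop) (t0 eps : R) : DPt -> Prop :=
  fun p => exists a b t, p = DInner a b t /\ Ptail a /\ Phead b /\
    0 < t < 1 /\ Rabs (t - t0) < eps.

Definition D_basic (S : DPt -> Prop) : Prop :=
  (exists v eps, 0 < eps /\ S = star_set v eps) \/
  (exists u w lo hi, E u w /\ 0 <= lo /\ lo < hi /\ hi <= 1 /\
       S = interval_set u w lo hi) \/
  (exists X w eps, is_end w /\ 0 < eps /\ S = Chat_set X w eps) \/
  (exists w h X t0 eps, limit_edge (NE w) (NE h) /\ separates X w h /\
       0 < t0 < 1 /\ 0 < eps /\
       S = bundle_set (node_in X (C_of X w)) (node_in X (C_of X h)) t0 eps) \/
  (exists v w X t0 eps, limit_edge (NV v) (NE w) /\ In v X /\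
       0 < t0 < 1 /\ 0 < eps /\
       S = bundle_set (fun a => a = NV v) (node_in X (C_of X w)) t0 eps) \/
  (exists w v X t0 eps, limit_edge (NE w) (NV v) /\ In v X /\
       0 < t0 < 1 /\ 0 < eps /\
       S = bundle_set (node_in X (C_of X w)) (fun b => b = NV v) t0 eps).

Definition D_open : topology Dspace :=
  generated (fun U : Dspace -> Prop =>
    exists S, D_basic S /\ U = (fun p => S (proj1_sig p))).

Definition cls (X : list V) (u : V) : V -> Prop :=
  fun y => (In u X /\ y = u) \/ (~ In u X /\ sc X u y).

Definition is_class (X : list V) (p : V -> Prop) : Prop := exists u, p = cls X u.

Definition fin_edges (p1 p2 : V -> Prop) : Prop :=
  exists l : list (V * V), forall u w, p1 u -> p2 w -> E u w -> In (u, w) l.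

(* Edges of D/P: QED u w is the edge (e, p1, p2) for e = (u,w) an edge of D,
   QEQ p1 p2 is the quotient edge (p1p2, p1, p2). *)
Inductive QEdge := QED (u w : V) | QEQ (p1 p2 : V -> Prop).

Definition qtail (X : list V) (e : QEdge) : V -> Prop :=
  match e with QED u _ => cls X u | QEQ p1 _ => p1 end.
Definition qhead (X : list V) (e : QEdge) : V -> Prop :=
  match e with QED _ w => cls X w | QEQ _ p2 => p2 end.

Definition is_qedge (X : list V) (e : QEdge) : Prop :=
  match e with
  | QED u w => E u w /\ cls X u <> cls X w /\ fin_edges (cls X u) (cls X w)
  | QEQ p1 p2 => is_class X p1 /\ is_class X p2 /\ p1 <> p2 /\ ~ fin_edges p1 p2
  end.

Inductive QPt := QVert (p : V -> Prop) | QInner (e : QEdge) (t : R).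

Definition in_quot (X : list V) (q : QPt) : Prop :=
  match q with
  | QVert p => is_class X p
  | QInner e t => is_qedge X e /\ 0 < t < 1
  end.

Definition qspace (X : list V) := { q : QPt | in_quot X q }.

Definition qpt (X : list V) (e : QEdge) (t : R) : QPt :=
  if Req_EM_T t 0 then QVert (qtail X e)
  else if Req_EM_T t 1 then QVert (qhead X e)
  else QInner e t.

Definition quot_open (X : list V) : topology (qspace X) :=
  fun U =>
    let U' := fun q => exists h : in_quot X q, U (exist _ q h) in
    forall e, is_qedge X e -> forall t, 0 <= t <= 1 -> U' (qpt X e t) ->
      exists d, 0 < d /\ forall s, 0 <= s <= 1 -> Rabs (s - t) < d -> U' (qpt X e s).

(* The bonding map f_{P_{X'} P_X} : D/P_{X'} -> D/P_X (X ⊆ X'),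
   written on the raw point type. *)
Definition coarse (X : list V) (p' : V -> Prop) : V -> Prop :=
  fun y => exists u, p' u /\ cls X u y.

Definition fbond (X X' : list V) (q : QPt) : QPt :=
  match q with
  | QVert p' => QVert (coarse X p')
  | QInner e t =>
      let p1 := coarse X (qtail X' e) in
      let p2 := coarse X (qhead X' e) in
      if decide (p1 = p2) then QVert p1
      else if decide (~ fin_edges p1 p2) then QInner (QEQ p1 p2) t
      else QInner e t
  end.

Variable enum : nat -> V.

(* X_n = {v_1, ..., v_n} = {enum 0, ..., enum (n-1)} *)
Definition Xn (n : nat) : list V := map enum (seq 0 n).

Definition limspace :=
  { s : forall n, qspace (Xn n) |
      forall n m, (n <= m)%nat -> fbond (Xn n) (Xn m) (proj1_sig (s m)) = proj1_sig (s n) }.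

(* subspace of the product topology *)
Definition lim_open : topology limspace :=
  generated (fun W : limspace -> Prop =>
    exists n (U : qspace (Xn n) -> Prop), quot_open (Xn n) U /\
      W = (fun s => U (proj1_sig s n))).

End Digraph.

Arguments DV {V}. Arguments DEnd {V}. Arguments DInner {V}.

(* The projections of |D| onto the quotients D/P_{X_n} commute with the bonding maps, so they
   define a map from |D| to the inverse limit. It is injective because distinct vertices, ends
   and edges are eventually separated by the partitions P_{X_n}. It is surjective because a
   compatible sequence of classes is either eventually a fixed vertex or a nested sequence of
   strong components; a walk threaded through these components, with its repetitions cut out,
   is a ray defining an end living in all of them. Compatible inner points of quotient edges
   come from an edge of D or, when the quotient edges are eventually infinite bundles, from a
   limit edge between the corresponding vertices or ends.
   The map is continuous because, by solidity, each D/P_X has finitely many edges, so an open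
   set of D/P_X contains uniform ε-stars around its vertices. Its inverse is continuous because
   every basic open set of |D| is the preimage of an open set of D/P_X as soon as X contains
   the finitely many vertices it mentions. *)

From Pilot Require Import Defs.
From Stdlib Require Import Reals List Classical ClassicalEpsilon Lia Lra.
From Stdlib Require Import FunctionalExtensionality PropExtensionality ProofIrrelevance.

Arguments NV {V}. Arguments NE {V}. Arguments QED {V}. Arguments QEQ {V}.
Arguments QVert {V}. Arguments QInner {V}.

Lemma pred_ext {A : Type} (p q : A -> Prop) : (forall x, p x <-> q x) -> p = q.
Proof.
  intro H; apply functional_extensionality; intro x; apply propositional_extensionality; auto.
Qed.

Section Digraph.
Variable V : Type.
Variable E : V -> V -> Prop.

Local Notation reach := (Defs.reach V E).
Local Notation sc := (Defs.sc V E).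
Local Notation cls := (Defs.cls V E).
Local Notation is_class := (Defs.is_class V E).
Local Notation coarse := (Defs.coarse V E).
Local Notation C_of := (Defs.C_of V E).
Local Notation is_end := (Defs.is_end V E).
Local Notation solid_ray := (Defs.solid_ray V E).
Local Notation equiv_rays := (Defs.equiv_rays V E).
Local Notation separates := (Defs.separates V E).

Lemma reach_notin_l X u z : reach X u z -> ~ In u X.
Proof. induction 1; auto. Qed.

Lemma reach_notin_r X u z : reach X u z -> ~ In z X.
Proof. induction 1; auto. Qed.

Lemma reach_trans X u w z : reach X u w -> reach X w z -> reach X u z.
Proof. intros H1 H2; induction H2; auto. eapply reach_step; eauto. Qed.

Lemma reach_incl X X' u z : incl X X' -> reach X' u z -> reach X u z.
Proof. intros Hi H; induction H; [apply reach_refl | eapply reach_step]; eauto. Qed.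

Lemma sc_refl X u : ~ In u X -> sc X u u.
Proof. split; apply reach_refl; auto. Qed.

Lemma sc_sym X u w : sc X u w -> sc X w u.
Proof. unfold Defs.sc; tauto. Qed.

Lemma sc_trans X u w z : sc X u w -> sc X w z -> sc X u z.
Proof. intros [] []; split; eapply reach_trans; eauto. Qed.

Lemma sc_incl X X' u z : incl X X' -> sc X' u z -> sc X u z.
Proof. intros Hi []; split; eapply reach_incl; eauto. Qed.

Lemma sc_notin X u z : sc X u z -> ~ In u X /\ ~ In z X.
Proof. intros [H _]; split; [eapply reach_notin_l | eapply reach_notin_r]; eauto. Qed.

Lemma cls_refl X u : cls X u u.
Proof.
  destruct (classic (In u X)); [left | right]; auto using sc_refl.
Qed.

Lemma cls_of_mem X u y : cls X u y -> cls X y = cls X u.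
Proof.
  intros [[Hu ->] | [Hu Hs]]; auto.
  destruct (sc_notin _ _ _ Hs) as [_ Hy].
  apply pred_ext; intro z; unfold Defs.cls.
  split; intros [[A B] | [A B]]; try contradiction; right; split; auto;
    eauto using sc_trans, sc_sym.
Qed.

Lemma class_eq_of_common X p q y : is_class X p -> is_class X q -> p y -> q y -> p = q.
Proof.
  intros [u ->] [w ->] H1 H2. rewrite <- (cls_of_mem _ _ _ H1). apply cls_of_mem; auto.
Qed.

Lemma class_eq_cls X p y : is_class X p -> p y -> p = cls X y.
Proof. intros Hp H. apply (class_eq_of_common X p _ y); auto using cls_refl. exists y; auto. Qed.

Lemma cls_incl X X' u y : incl X X' -> cls X' u y -> cls X u y.
Proof.
  intros Hi [[Hu ->] | [Hu Hs]]; [apply cls_refl |].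
  right; split; [intro; apply Hu; auto | eapply sc_incl; eauto].
Qed.

Lemma cls_singleton X u y : In u X -> cls X u y -> y = u.
Proof. intros H [[_ ?] | [? _]]; auto; contradiction. Qed.

Lemma cls_notin X u y : ~ In u X -> cls X u y -> ~ In y X.
Proof. intros H [[? _] | [_ Hs]]; [contradiction | apply (sc_notin _ _ _ Hs)]. Qed.

Lemma coarse_self X (p : V -> Prop) y : p y -> coarse X p y.
Proof. intro H; exists y; split; auto; apply cls_refl. Qed.

Lemma coarse_class X (p c : V -> Prop) :
  is_class X c -> (exists y, p y) -> (forall y, p y -> c y) -> coarse X p = c.
Proof.
  intros Hc [y0 Hy0] Hsub. apply pred_ext; intro z; split.
  - intros [u [Hu Hz]]. rewrite (class_eq_cls _ _ _ Hc (Hsub _ Hu)). auto.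
  - intro Hz. exists y0; split; auto. rewrite <- (class_eq_cls _ _ _ Hc (Hsub _ Hy0)). auto.
Qed.

Lemma fin_edges_sub (p q p' q' : V -> Prop) :
  (forall y, p' y -> p y) -> (forall y, q' y -> q y) -> fin_edges V E p q -> fin_edges V E p' q'.
Proof. intros H1 H2 [l Hl]; exists l; intros; apply Hl; auto. Qed.

Lemma not_fin_edges_edge (p q : V -> Prop) :
  ~ fin_edges V E p q -> exists u z, p u /\ q z /\ E u z.
Proof.
  intro H. apply NNPP; intro Hn. apply H. exists nil. intros u z Hu Hz Huz. apply Hn; eauto.
Qed.

Lemma equiv_rays_refl r : solid_ray r -> equiv_rays r r.
Proof. intros [_ H]; exact H. Qed.

Lemma equiv_rays_sym r r' : equiv_rays r r' -> equiv_rays r' r.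
Proof. intros H X; destruct (H X) as [N HN]; exists N; auto using sc_sym. Qed.

Lemma equiv_rays_trans r1 r2 r3 : equiv_rays r1 r2 -> equiv_rays r2 r3 -> equiv_rays r1 r3.
Proof.
  intros H1 H2 X; destruct (H1 X) as [N1 HN1]; destruct (H2 X) as [N2 HN2].
  exists (max N1 N2); intros i j Hi Hj.
  apply sc_trans with (r2 (max N1 N2)); [apply HN1 | apply HN2]; lia.
Qed.

Lemma C_of_notin X w y : C_of X w y -> ~ In y X.
Proof. intros [H _]; auto. Qed.

Lemma C_of_incl X X' w y : incl X X' -> C_of X' w y -> C_of X w y.
Proof.
  intros Hi [Hy [r [Hr [N HN]]]]; split; [intro; apply Hy; auto |].
  exists r; split; auto; exists N; eauto using sc_incl.
Qed.

Lemma C_of_tail w r X N : w r -> (forall i j, N <= i -> N <= j -> sc X (r i) (r j))%nat ->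
  forall i, (N <= i)%nat -> C_of X w (r i).
Proof.
  intros Hr HN i Hi. split; [apply (sc_notin _ _ _ (HN i i Hi Hi)) |].
  exists r; split; auto. exists N; auto.
Qed.

Lemma C_of_cls X w : is_end w -> exists u, ~ In u X /\ C_of X w = cls X u.
Proof.
  intros Hwe. pose proof Hwe as [r [Hr Hw]]. pose proof Hr as [_ Hs]. destruct (Hs X) as [N HN].
  assert (Hwr : w r) by (apply Hw; auto using equiv_rays_refl).
  assert (HnN : ~ In (r N) X) by apply (sc_notin _ _ _ (HN N N (le_n _) (le_n _))).
  exists (r N); split; auto.
  apply pred_ext; intro y; unfold Defs.cls; split.
  - intros [Hy [r' [Hr' [N' HN']]]]. right; split; auto.
    apply Hw in Hr' as [_ Heq]. destruct (Heq X) as [M HM].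
    apply sc_trans with (r (max N M)); [apply HN; lia |].
    apply sc_trans with (r' (max M N')); [apply HM; lia | apply sc_sym, HN'; lia].
  - intros [[A _] | [_ Hs']]; [contradiction |].
    split; [apply (sc_notin _ _ _ Hs') |].
    exists r; split; auto. exists N; intros i Hi.
    apply sc_trans with (r N); [apply sc_sym; auto | apply HN; lia].
Qed.

Lemma end_ext w h : is_end w -> is_end h -> (forall X y, C_of X w y <-> C_of X h y) -> w = h.
Proof.
  intros Hwe Hhe Hc. pose proof Hwe as [r0 [Hr0 Hw]]. pose proof Hhe as [r1 [Hr1 Hh]].
  assert (Heq : equiv_rays r0 r1).
  { intro X. pose proof Hr0 as [_ Hs0]. destruct (Hs0 X) as [N0 HN0].
    assert (HC : C_of X w (r0 N0)).
    { apply (C_of_tail w r0 X N0); auto. apply Hw; auto using equiv_rays_refl. }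
    apply Hc in HC as [_ [r' [Hr' [N' HN']]]].
    apply Hh in Hr' as [_ Hq]. destruct (Hq X) as [M HM].
    exists (max N0 (max N' M)); intros i j Hi Hj.
    apply sc_trans with (r0 N0); [apply HN0; lia |].
    apply sc_trans with (r' (max N0 (max N' M))); [apply HN'; lia | apply sc_sym, HM; lia]. }
  apply pred_ext; intro r'; rewrite Hw, Hh; split; intros [A B]; split;
    eauto using equiv_rays_trans, equiv_rays_sym.
Qed.

Lemma separates_iff X w h : separates X w h <-> C_of X w <> C_of X h.
Proof.
  unfold Defs.separates; split.
  - intros H Heq; apply H; rewrite Heq; tauto.
  - intros H Hall; apply H, pred_ext; auto.
Qed.

Lemma ends_separated w h : is_end w -> is_end h -> w <> h -> exists X, separates X w h.
Proof.
  intros Hw Hh Hne. apply NNPP; intro Hn. apply Hne, end_ext; auto.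
  intros X. pose proof (not_ex_all_not _ _ Hn X) as H. unfold Defs.separates in H.
  apply NNPP in H; auto.
Qed.

(** * From nested strong components to an end *)

Fixpoint is_path (v : V) (l : list V) : Prop :=
  match l with nil => True | z :: l' => E v z /\ is_path z l' end.

Fixpoint path_last (v : V) (l : list V) : V :=
  match l with nil => v | z :: l' => path_last z l' end.

Lemma is_path_rcons v l z : is_path v l -> E (path_last v l) z -> is_path v (l ++ z :: nil).
Proof.
  revert v; induction l as [|a l IH]; simpl; intros v H1 H2; [tauto |]. destruct H1; split; auto.
Qed.

Lemma path_last_rcons v l z : path_last v (l ++ z :: nil) = z.
Proof. revert v; induction l; simpl; auto. Qed.

Lemma reach_path X u z : reach X u z ->
  exists l, is_path u l /\ path_last u l = z /\ forall y, In y l -> reach X u y /\ reach X y z.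
Proof.
  induction 1 as [Hu | w z Hr [l [H1 [H2 H3]]] Hwz Hz].
  - exists nil; simpl; tauto.
  - exists (l ++ z :: nil); split; [apply is_path_rcons; subst; auto |].
    split; [apply path_last_rcons |].
    intros y Hy; apply in_app_or in Hy as [Hy | [<- | []]].
    + destruct (H3 y Hy); split; eauto using reach_step.
    + split; [eapply reach_step; eauto | apply reach_refl; auto].
Qed.

(* State [(k, v, l)]: the walk is at [v], inside segment [k], and [l] is what remains of it. *)
Fixpoint seg_walk (seg : nat -> list V) (v0 : V) (j : nat) : nat * V * list V :=
  match j with
  | O => (O, v0, seg O)
  | S j => match seg_walk seg v0 j with
           | (k, v, nil) => (S k, v, seg (S k))
           | (k, v, z :: l) => (k, z, l)
           end
  end.

Lemma walk_of_segments (P : nat -> V -> Prop) (x : nat -> V) (seg : nat -> list V) :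
  (forall k, is_path (x k) (seg k) /\ path_last (x k) (seg k) = x (S k)) ->
  (forall k, P k (x k)) -> (forall k y, In y (seg k) -> P k y) ->
  exists (W : nat -> V) (K : nat -> nat),
    (forall j, W (S j) = W j \/ E (W j) (W (S j))) /\
    (forall j j', (j <= j')%nat -> (K j <= K j')%nat) /\
    (forall k, exists j, (k <= K j)%nat) /\
    (forall j, P (K j) (W j)).
Proof.
  intros Hseg Hx Hin. set (st := seg_walk seg (x O)).
  assert (Inv : forall j, let '(k, v, l) := st j in
            P k v /\ is_path v l /\ path_last v l = x (S k) /\ forall y, In y l -> P k y).
  { unfold st; induction j as [|j IH]; simpl; [destruct (Hseg O); auto |].
    destruct (seg_walk seg (x O) j) as [[k v] [|z l]]; simpl in *.
    - destruct IH as [_ [_ [-> _]]]. destruct (Hseg (S k)). auto.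
    - destruct IH as [_ [[? ?] [? Hl]]]. repeat split; auto. }
  exists (fun j => snd (fst (st j))), (fun j => fst (fst (st j))).
  assert (Kstep : forall j, (fst (fst (st j)) <= fst (fst (st (S j))))%nat).
  { intro j; unfold st; simpl. destruct (seg_walk seg (x O) j) as [[k v] [|z l]]; simpl; lia. }
  assert (Kprog : forall n j, (length (snd (st j)) <= n)%nat ->
            exists j', (fst (fst (st j)) < fst (fst (st j')))%nat).
  { induction n as [|n IH]; intros j Hl; unfold st in *;
      destruct (seg_walk seg (x O) j) as [[k v] [|z l]] eqn:Hj; simpl in Hl.
    - exists (S j); simpl; rewrite Hj; simpl; lia.
    - lia.
    - exists (S j); simpl; rewrite Hj; simpl; lia.
    - destruct (IH (S j)) as [j' Hj']; [simpl; rewrite Hj; simpl; lia |].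
      exists j'. simpl in Hj'. rewrite Hj in Hj'. simpl in *; lia. }
  split; [| split; [| split]].
  - intro j. specialize (Inv j). unfold st in *; simpl.
    destruct (seg_walk seg (x O) j) as [[k v] [|z l]]; simpl; auto. right; apply Inv.
  - intros j j' H; induction H; auto. specialize (Kstep m); lia.
  - induction k as [|k [j Hj]]; [exists O; lia |].
    destruct (Kprog _ j (le_n _)) as [j' Hj']. exists j'; lia.
  - intro j; specialize (Inv j); destruct (st j) as [[k v] l]; exact (proj1 Inv).
Qed.

Lemma ex_last_index (P : nat -> Prop) B j :
  P j -> (forall i, P i -> (i < B)%nat) -> exists m, P m /\ forall i, P i -> (i <= m)%nat.
Proof.
  revert j; induction B as [|B IH]; intros j Hj HB; [specialize (HB j Hj); lia |].
  destruct (classic (P B)) as [HPB | HPB].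
  - exists B; split; auto. intros i Hi; specialize (HB i Hi); lia.
  - apply (IH j Hj). intros i Hi. specialize (HB i Hi).
    destruct (Nat.eq_dec i B); [subst; contradiction | lia].
Qed.

(* Jumping to the last visit of the current vertex before each step removes all repetitions. *)
Lemma ray_of_walk (W : nat -> V) :
  (forall j, W (S j) = W j \/ E (W j) (W (S j))) ->
  (forall j, exists B, forall i, W i = W j -> (i < B)%nat) ->
  exists kk : nat -> nat, (forall i, (i <= kk i)%nat) /\ is_ray V E (fun i => W (kk i)).
Proof.
  intros Hstep Hfin.
  assert (Hlast : forall j, exists m, W m = W j /\ forall i, W i = W j -> (i <= m)%nat).
  { intro j; destruct (Hfin j) as [B HB]. apply (ex_last_index _ B j); auto. }
  destruct (choice _ Hlast) as [last Hl].
  set (kk := fix kk (i : nat) : nat := match i with O => last O | S i => last (S (kk i)) end).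
  assert (kk_last : forall i i', W i' = W (kk i) -> (i' <= kk i)%nat).
  { intros i i' H. assert (Hk : exists j, kk i = last j) by (destruct i; simpl; eauto).
    destruct Hk as [j Hj]. rewrite Hj in *. destruct (Hl j) as [A B]. apply B. rewrite H; auto. }
  assert (kk_incr : forall i, (kk i < kk (S i))%nat).
  { intro i; simpl. destruct (Hl (S (kk i))) as [_ H]. specialize (H (S (kk i)) eq_refl); lia. }
  assert (kk_mono : forall i i', (i < i')%nat -> (kk i < kk i')%nat).
  { intros i i' H; induction H; [apply kk_incr | specialize (kk_incr m); lia]. }
  exists kk; split; [| split].
  - induction i; [lia | specialize (kk_incr i); lia].
  - intros i i' Heq. destruct (Nat.lt_trichotomy i i') as [Hlt | [| Hlt]]; auto.
    + specialize (kk_mono _ _ Hlt). specialize (kk_last i (kk i') (eq_sym Heq)). lia.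
    + specialize (kk_mono _ _ Hlt). specialize (kk_last i' (kk i) Heq). lia.
  - intro i. assert (H : W (kk (S i)) = W (S (kk i))) by apply (Hl (S (kk i))).
    rewrite H. destruct (Hstep (kk i)) as [H' | H']; auto.
    specialize (kk_last i _ H'); lia.
Qed.

Section NestedComponents.
Variable Y : nat -> list V.
Variable d : nat -> V -> Prop.
Hypothesis Y_exhaust : forall X : list V, exists k, incl X (Y k).
Hypothesis d_component : forall k, exists u, ~ In u (Y k) /\ d k = cls (Y k) u.
Hypothesis d_nested : forall k y, d (S k) y -> d k y.

Lemma d_nested_le k k' : (k <= k')%nat -> forall y, d k' y -> d k y.
Proof. induction 1; auto. Qed.

Lemma d_notin k y : d k y -> ~ In y (Y k).
Proof. destruct (d_component k) as [u [Hu ->]]. apply cls_notin; auto. Qed.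

Lemma d_sc k y z : d k y -> d k z -> sc (Y k) y z.
Proof.
  destruct (d_component k) as [u [Hu ->]].
  intros [[? _] | [_ H1]] [[? _] | [_ H2]]; try contradiction. eauto using sc_trans, sc_sym.
Qed.

Lemma d_sc_closed k y z : d k y -> sc (Y k) y z -> d k z.
Proof.
  destruct (d_component k) as [u [Hu ->]]. intros H1 H2.
  rewrite <- (cls_of_mem _ _ _ H1). right; split; auto. apply (sc_notin _ _ _ H2).
Qed.

Lemma walk_through_components : exists W : nat -> V,
  (forall j, W (S j) = W j \/ E (W j) (W (S j))) /\
  (forall k, exists J, forall j, (J <= j)%nat -> d k (W j)).
Proof.
  assert (Hx : forall k, exists y, d k y).
  { intro k; destruct (d_component k) as [u [_ ->]]; exists u; apply cls_refl. }
  destruct (choice _ Hx) as [x Hxd].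
  assert (Hseg : forall k, exists l, (is_path (x k) l /\ path_last (x k) l = x (S k)) /\
                                     forall y, In y l -> d k y).
  { intro k. assert (Hs : sc (Y k) (x k) (x (S k))) by auto using d_sc.
    destruct (reach_path _ _ _ (proj1 Hs)) as [l [H1 [H2 H3]]].
    exists l; split; auto. intros y Hy. destruct (H3 y Hy) as [R1 R2].
    apply d_sc_closed with (x k); auto. split; auto. eapply reach_trans; eauto. apply Hs. }
  destruct (choice _ Hseg) as [seg Hsg].
  destruct (walk_of_segments d x seg) as [W [K [Hstep [Kmono [Kunb HWK]]]]];
    try apply Hsg; auto.
  exists W; split; auto. intro k; destruct (Kunb k) as [J HJ]; exists J; intros j Hj.
  apply d_nested_le with (K j); auto. specialize (Kmono _ _ Hj); lia.
Qed.

Lemma end_of_nested_components : exists w, is_end w /\ forall k, C_of (Y k) w = d k.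
Proof.
  destruct walk_through_components as [W [Hstep Htail]].
  assert (Hfin : forall j, exists B, forall i, W i = W j -> (i < B)%nat).
  { intro j. destruct (Y_exhaust (W j :: nil)) as [k Hk]. destruct (Htail k) as [J HJ].
    exists J; intros i Hi. destruct (Nat.lt_ge_cases i J) as [| Hge]; auto.
    exfalso; apply (d_notin k (W i)); auto. rewrite Hi; apply Hk; left; auto. }
  destruct (ray_of_walk W Hstep Hfin) as [kk [Hkk Hray]].
  set (r i := W (kk i)).
  assert (Hrt : forall k, exists J, forall i, (J <= i)%nat -> d k (r i)).
  { intro k; destruct (Htail k) as [J HJ]; exists J; intros i Hi; apply HJ.
    specialize (Hkk i); lia. }
  assert (Hr : solid_ray r).
  { split; auto. intro X. destruct (Y_exhaust X) as [k Hk]. destruct (Hrt k) as [J HJ].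
    exists J; intros i j Hi Hj. apply sc_incl with (Y k); auto using d_sc. }
  exists (fun r' => solid_ray r' /\ equiv_rays r r'). split; [exists r; tauto |].
  intro k. apply pred_ext; intro y. destruct (Hrt k) as [J HJ]. split.
  - intros [Hy [r' [[_ Heq] [N HN]]]]. destruct (Heq (Y k)) as [M HM].
    set (i := max J (max N M)).
    apply d_sc_closed with (r i); [apply HJ; lia |].
    apply sc_trans with (r' i); [apply HM; lia | apply sc_sym, HN; lia].
  - intro Hy. split; [apply d_notin; auto |].
    exists r; split; [split; auto using equiv_rays_refl |].
    exists J; intros i Hi. apply d_sc; auto.
Qed.

End NestedComponents.

Local Notation node := (Defs.node V).
Local Notation node_in := (Defs.node_in V E).
Local Notation is_edge := (Defs.is_edge V E).
Local Notation fin_edges := (Defs.fin_edges V E).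

Definition is_node (a : node) : Prop := match a with NV _ => True | NE w => is_end w end.

Definition node_cls (X : list V) (a : node) : V -> Prop :=
  match a with NV v => cls X v | NE w => C_of X w end.

Lemma node_cls_class X a : is_node a -> is_class X (node_cls X a).
Proof.
  destruct a as [v|w]; simpl; intro H; [exists v; auto |].
  destruct (C_of_cls X w H) as [u [_ Hu]]. exists u; auto.
Qed.

Lemma node_cls_inhabited X a : is_node a -> exists y, node_cls X a y.
Proof.
  intro H; destruct (node_cls_class X a H) as [u Hu]; exists u; rewrite Hu; apply cls_refl.
Qed.

Lemma node_cls_incl X X' a y : incl X X' -> node_cls X' a y -> node_cls X a y.
Proof. destruct a; simpl; intros; [eapply cls_incl | eapply C_of_incl]; eauto. Qed.

Lemma coarse_node_cls X X' a : incl X X' -> is_node a -> coarse X (node_cls X' a) = node_cls X a.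
Proof.
  intros Hi Ha. apply coarse_class; auto using node_cls_class, node_cls_inhabited.
  intros; eapply node_cls_incl; eauto.
Qed.

Lemma node_cls_eq_incl X X' a a' : incl X X' -> is_node a -> is_node a' ->
  node_cls X' a' = node_cls X' a -> node_cls X a' = node_cls X a.
Proof.
  intros Hi Ha Ha' H. rewrite <- (coarse_node_cls X X' a' Hi Ha'), H. apply coarse_node_cls; auto.
Qed.

Lemma node_cls_neq_incl X X' a b : incl X X' -> is_node a -> is_node b ->
  node_cls X a <> node_cls X b -> node_cls X' a <> node_cls X' b.
Proof. intros Hi Ha Hb Hne Heq. apply Hne, (node_cls_eq_incl X X'); auto. Qed.

Lemma node_cls_eq_iff_sub X X' a C : incl X X' -> is_node a -> is_class X C ->
  (node_cls X a = C <-> forall y, node_cls X' a y -> C y).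
Proof.
  intros Hi Ha HC; split.
  - intros <- y; apply node_cls_incl; auto.
  - intro H. destruct (node_cls_inhabited X' a Ha) as [y Hy].
    apply class_eq_of_common with (X := X) (y := y); auto using node_cls_class.
    eapply node_cls_incl; eauto.
Qed.

Lemma node_in_iff X C a : is_node a -> is_class X C -> (node_in X C a <-> node_cls X a = C).
Proof.
  intros Ha HC; destruct a as [v|h]; simpl.
  - split; [intro H; symmetry; apply class_eq_cls; auto | intros <-; apply cls_refl].
  - split; [intros [_ H]; apply pred_ext; auto | intros <-; split; [exact Ha | tauto]].
Qed.

Lemma nodes_separated a b : is_node a -> is_node b -> a <> b ->
  exists X, node_cls X a <> node_cls X b.
Proof.
  intros Ha Hb Hne; destruct a as [u|w]; destruct b as [v|h]; simpl in *.
  - exists (u :: nil); intro Heq.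
    assert (H := cls_refl (u :: nil) v). rewrite <- Heq in H.
    apply cls_singleton in H; [subst; auto | left; auto].
  - exists (u :: nil); intro Heq.
    assert (H := cls_refl (u :: nil) u). rewrite Heq in H. apply (C_of_notin _ _ _ H); left; auto.
  - exists (v :: nil); intro Heq.
    assert (H := cls_refl (v :: nil) v). rewrite <- Heq in H. apply (C_of_notin _ _ _ H); left; auto.
  - assert (w <> h) by congruence.
    destruct (ends_separated w h Ha Hb H) as [X HX]. exists X; apply separates_iff; auto.
Qed.

Lemma star_node_iff X v a : In v X -> is_node a -> (a = NV v <-> node_cls X a = cls X v).
Proof.
  intros Hv Ha; split; [intros ->; auto |].
  destruct a as [u|h]; simpl; intro H.
  - assert (Hu := cls_refl X u). rewrite H in Hu. apply cls_singleton in Hu; auto; subst; auto.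
  - assert (Hu := cls_refl X v). rewrite <- H in Hu. apply C_of_notin in Hu; contradiction.
Qed.

Lemma chat_node_iff X0 X w a : incl X0 X -> is_end w -> is_node a ->
  (node_in X0 (C_of X0 w) a <-> (forall y, node_cls X a y -> C_of X0 w y)).
Proof.
  intros Hi Hw Ha. assert (HC := node_cls_class X0 (NE w) Hw).
  rewrite node_in_iff; auto. apply node_cls_eq_iff_sub; auto.
Qed.

(* With [X'] := [X] plus the endpoints of the finitely many edges, the limit edge yields an edge
   between the classes of [P_X'], which lie inside those of [P_X] yet avoid [X']. *)
Lemma limit_edge_not_fin_edges X a b : is_edge a b -> ~ (exists u w, a = NV u /\ b = NV w) ->
  node_cls X a <> node_cls X b -> ~ fin_edges (node_cls X a) (node_cls X b).
Proof.
  intros He Hnv Hne [l Hl].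
  set (X' := X ++ map fst l ++ map snd l).
  assert (Hi : incl X X') by (intros y Hy; apply in_or_app; auto).
  assert (Hl1 : forall u z, In (u, z) l -> In u X').
  { intros u z H; apply in_or_app; right; apply in_or_app; left; apply (in_map fst) in H; auto. }
  assert (Hl2 : forall u z, In (u, z) l -> In z X').
  { intros u z H; apply in_or_app; right; apply in_or_app; right; apply (in_map snd) in H; auto. }
  assert (Hsep : forall a b, is_node a -> is_node b -> node_cls X a <> node_cls X b ->
            node_cls X' a <> node_cls X' b) by eauto using node_cls_neq_incl.
  destruct a as [v|w]; destruct b as [v'|h]; simpl in *.
  - apply Hnv; eauto.
  - destruct He as [Hh Hw].
    destruct (Hw X') as [z [Hz Hvz]].
    { intro Hc. apply (Hsep (NV v) (NE h)); simpl; auto. apply class_eq_of_common with (X := X') (y := v);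
        [exists v | apply (node_cls_class X' (NE h)) | apply cls_refl |]; auto. }
    apply (C_of_notin _ _ _ Hz). eapply Hl2, Hl; eauto using cls_refl, C_of_incl.
  - destruct He as [Hw' Hw].
    destruct (Hw X') as [z [Hz Hvz]].
    { intro Hc. apply (Hsep (NE w) (NV v')); simpl; auto. apply class_eq_of_common with (X := X') (y := v');
        [apply (node_cls_class X' (NE w)) | exists v' | | apply cls_refl]; auto. }
    apply (C_of_notin _ _ _ Hz). eapply Hl1, Hl; eauto using cls_refl, C_of_incl.
  - destruct He as [Hw [Hh [_ Hs]]].
    destruct (Hs X') as [u [z [Hu [Hz Huz]]]].
    { apply separates_iff, (Hsep (NE w) (NE h)); auto. }
    apply (C_of_notin _ _ _ Hu). eapply Hl1, Hl; eauto; eapply C_of_incl; eauto.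
Qed.

Section Irreflexive.
Hypothesis E_irrefl : forall v, ~ E v v.

Lemma is_edge_nodes a b : is_edge a b -> is_node a /\ is_node b /\ a <> b.
Proof.
  destruct a as [u|w]; destruct b as [v|h]; simpl.
  - intro H; repeat split; auto. intro Heq; injection Heq; intros ->; apply (E_irrefl _ H).
  - intros [H _]; repeat split; auto; discriminate.
  - intros [H _]; repeat split; auto; discriminate.
  - intros [H1 [H2 [H3 _]]]; repeat split; auto. congruence.
Qed.

(** * The projections of |D| onto the quotients D/P_X *)

Local Notation qtail := (Defs.qtail V E).
Local Notation qhead := (Defs.qhead V E).
Local Notation is_qedge := (Defs.is_qedge V E).
Local Notation in_quot := (Defs.in_quot V E).
Local Notation fbond := (Defs.fbond V E).
Local Notation in_D := (Defs.in_D V E).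

Definition qedge_of (X : list V) (a b : node) : QEdge V :=
  match a, b with NV u, NV w => QED u w | _, _ => QEQ (node_cls X a) (node_cls X b) end.

Definition proj_pt (X : list V) (p : DPt V) : QPt V :=
  match p with
  | DV v => QVert (cls X v)
  | DEnd w => QVert (C_of X w)
  | DInner a b t =>
      if decide (node_cls X a = node_cls X b) then QVert (node_cls X a)
      else if decide (~ fin_edges (node_cls X a) (node_cls X b))
           then QInner (QEQ (node_cls X a) (node_cls X b)) t
      else QInner (qedge_of X a b) t
  end.

Lemma proj_pt_same X a b t :
  node_cls X a = node_cls X b -> proj_pt X (DInner a b t) = QVert (node_cls X a).
Proof. intro H; simpl; destruct (decide _); [auto | contradiction]. Qed.

Lemma proj_pt_QEQ X a b t : node_cls X a <> node_cls X b ->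
  ~ fin_edges (node_cls X a) (node_cls X b) ->
  proj_pt X (DInner a b t) = QInner (QEQ (node_cls X a) (node_cls X b)) t.
Proof.
  intros H1 H2; simpl; destruct (decide _); [contradiction |].
  destruct (decide _); [auto | contradiction].
Qed.

Lemma proj_pt_QED X u w t : cls X u <> cls X w -> fin_edges (cls X u) (cls X w) ->
  proj_pt X (DInner (NV u) (NV w) t) = QInner (QED u w) t.
Proof.
  intros H1 H2; simpl; destruct (decide _); [contradiction |].
  destruct (decide _); [contradiction | auto].
Qed.

Lemma proj_pt_diff X a b t : is_edge a b -> node_cls X a <> node_cls X b ->
  exists e, proj_pt X (DInner a b t) = QInner e t /\ qtail X e = node_cls X a /\
            qhead X e = node_cls X b /\ is_qedge X e.
Proof.
  intros He Hne. destruct (is_edge_nodes _ _ He) as [Ha [Hb _]].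
  destruct (classic (fin_edges (node_cls X a) (node_cls X b))) as [Hf | Hf].
  - destruct (classic (exists u w, a = NV u /\ b = NV w)) as [[u [w [-> ->]]] | Hnv].
    + exists (QED u w). rewrite proj_pt_QED by auto. repeat split; auto.
    + exfalso; eapply limit_edge_not_fin_edges; eauto.
  - exists (QEQ (node_cls X a) (node_cls X b)). rewrite proj_pt_QEQ; auto.
    repeat split; auto using node_cls_class.
Qed.

Lemma proj_pt_in_quot X p : in_D p -> in_quot X (proj_pt X p).
Proof.
  destruct p as [v|w|a b t]; intro Hp; simpl.
  - exists v; auto.
  - apply (node_cls_class X (NE w) Hp).
  - destruct Hp as [He Ht]. destruct (is_edge_nodes _ _ He) as [Ha [Hb _]].
    destruct (classic (node_cls X a = node_cls X b)) as [Hs | Hd].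
    + fold (proj_pt X (DInner a b t)). rewrite proj_pt_same; auto. apply node_cls_class; auto.
    + fold (proj_pt X (DInner a b t)).
      destruct (proj_pt_diff X a b t He Hd) as [e [-> [_ [_ Hq]]]]. simpl; auto.
Qed.

Lemma fbond_proj_pt X X' p : incl X X' -> in_D p -> fbond X X' (proj_pt X' p) = proj_pt X p.
Proof.
  intros Hi; destruct p as [v|w|a b t]; simpl.
  - intros _. f_equal. apply (coarse_node_cls X X' (NV v)); simpl; auto.
  - intro H. f_equal. apply (coarse_node_cls X X' (NE w)); simpl; auto.
  - intros [He Ht]. destruct (is_edge_nodes _ _ He) as [Ha [Hb _]].
    fold (proj_pt X (DInner a b t)) (proj_pt X' (DInner a b t)).
    assert (Hco : forall c, is_node c -> coarse X (node_cls X' c) = node_cls X c)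
      by auto using coarse_node_cls.
    destruct (classic (node_cls X' a = node_cls X' b)) as [Hs' | Hd'].
    { rewrite (proj_pt_same X' a b t Hs'), proj_pt_same by (apply (node_cls_eq_incl X X'); auto).
      simpl; rewrite Hco; auto. }
    destruct (classic (fin_edges (node_cls X' a) (node_cls X' b))) as [Hf' | Hf'].
    + destruct (classic (exists u w, a = NV u /\ b = NV w)) as [[u [w [-> ->]]] | Hnv];
        [| exfalso; eapply limit_edge_not_fin_edges; eauto].
      rewrite (proj_pt_QED X' u w t) by auto. simpl.
      rewrite (Hco (NV u) I : coarse X (cls X' u) = cls X u), (Hco (NV w) I : coarse X (cls X' w) = cls X w).
      auto.
    + rewrite proj_pt_QEQ by auto. simpl. rewrite !Hco by auto.
      destruct (decide _); auto. destruct (decide _) as [| Hf]; auto.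
      exfalso; apply Hf'. apply NNPP in Hf. revert Hf.
      apply fin_edges_sub; intros; eapply node_cls_incl; eauto.
Qed.

Definition node_pt (a : node) : DPt V := match a with NV v => DV v | NE w => DEnd w end.

Lemma proj_node_pt X a : proj_pt X (node_pt a) = QVert (node_cls X a).
Proof. destruct a; reflexivity. Qed.

Lemma in_D_cases p : in_D p ->
  (exists a, is_node a /\ p = node_pt a) \/
  (exists a b t, p = DInner a b t /\ is_edge a b /\ 0 < t < 1).
Proof.
  destruct p as [v|w|a b t]; simpl; intro H.
  - left; exists (NV v); simpl; auto.
  - left; exists (NE w); simpl; auto.
  - right; exists a, b, t; destruct H; auto.
Qed.

Definition retime (q : QPt V) (s : R) : QPt V :=
  match q with QInner e _ => QInner e s | _ => q end.

Lemma proj_pt_retime X a b t s : proj_pt X (DInner a b s) = retime (proj_pt X (DInner a b t)) s.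
Proof. simpl. destruct (decide _); auto. destruct (decide _); auto. Qed.

Lemma proj_pt_limit_edge_cong X a b a' b' s : is_edge a b -> ~ (exists u w, a = NV u /\ b = NV w) ->
  node_cls X a' = node_cls X a -> node_cls X b' = node_cls X b ->
  proj_pt X (DInner a' b' s) = proj_pt X (DInner a b s).
Proof.
  intros He Hnv H1 H2. simpl. rewrite H1, H2.
  destruct (decide _) as [| Hd]; auto. destruct (decide _) as [| Hf]; auto.
  exfalso; eapply limit_edge_not_fin_edges; eauto. apply NNPP in Hf; auto.
Qed.

(** * The inverse limit *)

Section InverseLimit.
Variable enum : nat -> V.
Hypothesis enum_surj : forall v, exists n, enum n = v.

Local Notation Xn := (Defs.Xn V enum).

Lemma Xn_incl n m : (n <= m)%nat -> incl (Xn n) (Xn m).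
Proof.
  intros Hnm x Hx. unfold Defs.Xn in *. apply in_map_iff in Hx as [i [<- Hi]].
  apply in_map; apply in_seq in Hi; apply in_seq; lia.
Qed.

Lemma Xn_exhaust_ge (X : list V) N : exists n, (N <= n)%nat /\ incl X (Xn n).
Proof.
  induction X as [|x X [n [HN Hn]]]; [exists N; split; [lia | intros y []] |].
  destruct (enum_surj x) as [i <-].
  exists (max n (S i)); split; [lia |]. intros y [<- | Hy].
  - unfold Defs.Xn; apply in_map, in_seq; lia.
  - apply (Xn_incl n); [lia | auto].
Qed.

Lemma Xn_exhaust (X : list V) : exists n, incl X (Xn n).
Proof. destruct (Xn_exhaust_ge X O) as [n [_ Hn]]; eauto. Qed.

Lemma node_eq_of_eventually_cls_eq a b N : is_node a -> is_node b ->
  (forall n, (N <= n)%nat -> node_cls (Xn n) a = node_cls (Xn n) b) -> a = b.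
Proof.
  intros Ha Hb Heq. apply NNPP; intro Hne.
  destruct (nodes_separated a b Ha Hb Hne) as [X HX].
  destruct (Xn_exhaust_ge X N) as [n [Hn HXn]].
  apply (node_cls_neq_incl X (Xn n) a b); auto.
Qed.

Lemma nodes_eventually_separated a b : is_node a -> is_node b -> a <> b ->
  exists N, forall n, (N <= n)%nat -> node_cls (Xn n) a <> node_cls (Xn n) b.
Proof.
  intros Ha Hb Hne. destruct (nodes_separated a b Ha Hb Hne) as [X HX].
  destruct (Xn_exhaust X) as [N HN]. exists N; intros n Hn.
  apply (node_cls_neq_incl X); auto. intros y Hy; eapply Xn_incl; eauto.
Qed.

Lemma proj_pt_edge_eventually a b t : is_edge a b -> exists N, forall n, (N <= n)%nat ->
  exists e, proj_pt (Xn n) (DInner a b t) = QInner e t /\ qtail (Xn n) e = node_cls (Xn n) a /\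
            qhead (Xn n) e = node_cls (Xn n) b.
Proof.
  intro He. destruct (is_edge_nodes _ _ He) as [Ha [Hb Hne]].
  destruct (nodes_eventually_separated a b Ha Hb Hne) as [N HN]. exists N; intros n Hn.
  destruct (proj_pt_diff (Xn n) a b t He (HN n Hn)) as [e [? [? [? _]]]]. eauto.
Qed.

Lemma proj_pt_inj p q : in_D p -> in_D q -> (forall n, proj_pt (Xn n) p = proj_pt (Xn n) q) -> p = q.
Proof.
  intros Hp Hq Heq.
  destruct (in_D_cases p Hp) as [[a [Ha ->]] | [a [b [t [-> [He Ht]]]]]];
  destruct (in_D_cases q Hq) as [[a' [Ha' ->]] | [a' [b' [t' [-> [He' Ht']]]]]].
  - f_equal. apply (node_eq_of_eventually_cls_eq a a' O); auto. intros n _.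
    specialize (Heq n). rewrite !proj_node_pt in Heq. congruence.
  - destruct (proj_pt_edge_eventually a' b' t' He') as [N HN].
    destruct (HN N (le_n _)) as [e [He2 _]]. specialize (Heq N).
    rewrite proj_node_pt, He2 in Heq; discriminate.
  - destruct (proj_pt_edge_eventually a b t He) as [N HN].
    destruct (HN N (le_n _)) as [e [He2 _]]. specialize (Heq N).
    rewrite proj_node_pt, He2 in Heq; discriminate.
  - destruct (is_edge_nodes _ _ He) as [Ha [Hb _]].
    destruct (is_edge_nodes _ _ He') as [Ha' [Hb' _]].
    destruct (proj_pt_edge_eventually a b t He) as [N1 HN1].
    destruct (proj_pt_edge_eventually a' b' t' He') as [N2 HN2].
    assert (Hn : forall n, (max N1 N2 <= n)%nat -> t = t' /\
      node_cls (Xn n) a = node_cls (Xn n) a' /\ node_cls (Xn n) b = node_cls (Xn n) b').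
    { intros n Hn. destruct (HN1 n ltac:(lia)) as [e [E1 [T1 H1]]].
      destruct (HN2 n ltac:(lia)) as [e' [E2 [T2 H2]]].
      specialize (Heq n). rewrite E1, E2 in Heq. injection Heq; intros <- <-.
      rewrite <- T1, <- T2, <- H1, <- H2; auto. }
    destruct (Hn _ (le_n _)) as [<- _].
    rewrite (node_eq_of_eventually_cls_eq a a' (max N1 N2)), (node_eq_of_eventually_cls_eq b b' (max N1 N2));
      auto; intros n H; apply Hn; auto.
Qed.

Lemma node_of_compatible_classes (c : nat -> V -> Prop) n0 :
  (forall m, (n0 <= m)%nat -> is_class (Xn m) (c m)) ->
  (forall n m, (n0 <= n)%nat -> (n <= m)%nat -> coarse (Xn n) (c m) = c n) ->
  exists a, is_node a /\ forall m, (n0 <= m)%nat -> node_cls (Xn m) a = c m.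
Proof.
  intros Hc Hco.
  assert (Hsub : forall n m y, (n0 <= n)%nat -> (n <= m)%nat -> c m y -> c n y).
  { intros n m y H1 H2 H3. rewrite <- (Hco n m H1 H2). apply coarse_self; auto. }
  destruct (classic (exists n1 v, (n0 <= n1)%nat /\ In v (Xn n1) /\ c n1 = cls (Xn n1) v))
    as [[n1 [v [H1 [H2 H3]]]] | Hno].
  - exists (NV v); split; simpl; auto. intros m Hm.
    destruct (Nat.le_ge_cases n1 m) as [Hle | Hge].
    + destruct (Hc m Hm) as [u Hu]. rewrite Hu.
      assert (Hu1 : c n1 u) by (apply Hsub with m; auto; rewrite Hu; apply cls_refl).
      rewrite H3 in Hu1. apply cls_singleton in Hu1; auto. subst; auto.
    + rewrite <- (Hco m n1 Hm Hge), H3. symmetry.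
      apply (coarse_node_cls _ _ (NV v)); simpl; auto using Xn_incl.
  - destruct (end_of_nested_components (fun k => Xn (n0 + k)) (fun k => c (n0 + k)%nat))
      as [w [Hw Hcw]].
    + intro X; destruct (Xn_exhaust_ge X n0) as [n [Hn Hi]]. exists (n - n0)%nat.
      replace (n0 + (n - n0))%nat with n by lia; auto.
    + intro k. destruct (Hc (n0 + k)%nat ltac:(lia)) as [u Hu]. exists u; split; auto.
      intro Hin. apply Hno. exists (n0 + k)%nat, u; split; [lia | auto].
    + intros k y Hy. apply Hsub with (n0 + S k)%nat; [lia | lia | auto].
    + exists (NE w); split; simpl; auto. intros m Hm.
      replace m with (n0 + (m - n0))%nat by lia. apply Hcw.
Qed.

Lemma is_edge_of_not_fin_edges a b n0 : is_node a -> is_node b ->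
  (forall m, (n0 <= m)%nat -> ~ fin_edges (node_cls (Xn m) a) (node_cls (Xn m) b)) ->
  node_cls (Xn n0) a <> node_cls (Xn n0) b -> is_edge a b.
Proof.
  intros Ha Hb Hinf Hne.
  assert (Hedges : forall X, exists m, incl X (Xn m) /\
            exists x z, node_cls (Xn m) a x /\ node_cls (Xn m) b z /\ E x z).
  { intro X. destruct (Xn_exhaust_ge X n0) as [m [Hm Hi]].
    exists m; split; auto. apply not_fin_edges_edge, Hinf; auto. }
  destruct a as [u|w]; destruct b as [v|h]; simpl in *.
  - exfalso. destruct (Xn_exhaust_ge (u :: v :: nil) n0) as [m [Hm Hi]].
    apply (Hinf m Hm). exists ((u, v) :: nil). intros x y Hx Hy _.
    apply cls_singleton in Hx; [| apply Hi; simpl; auto].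
    apply cls_singleton in Hy; [| apply Hi; simpl; auto]. subst; left; auto.
  - split; auto. intros X _. destruct (Hedges (u :: X)) as [m [Hi [x [z [Hx [Hz Hxz]]]]]].
    apply cls_singleton in Hx; [subst x | apply Hi; simpl; auto].
    exists z; split; auto. eapply C_of_incl; eauto. intros y Hy; apply Hi; simpl; auto.
  - split; auto. intros X _. destruct (Hedges (v :: X)) as [m [Hi [x [z [Hx [Hz Hxz]]]]]].
    apply cls_singleton in Hz; [subst z | apply Hi; simpl; auto].
    exists x; split; auto. eapply C_of_incl; eauto. intros y Hy; apply Hi; simpl; auto.
  - repeat split; auto; [congruence |]. intros X _.
    destruct (Hedges X) as [m [Hi [x [z [Hx [Hz Hxz]]]]]].
    exists x, z; split; [| split]; auto; eapply C_of_incl; eauto.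
Qed.

Lemma fbond_inner_inv X X' q e t : incl X X' -> in_quot X' q -> fbond X X' q = QInner e t ->
  exists e', q = QInner e' t /\ qtail X e = coarse X (qtail X' e') /\
    qhead X e = coarse X (qhead X' e') /\ (e = e' \/ exists p1 p2, e = QEQ p1 p2).
Proof.
  intros Hi Hq Hb. destruct q as [c | e' s]; simpl in Hb; [discriminate |].
  destruct (decide _); [discriminate |].
  destruct (decide _) as [Hf | Hf]; injection Hb; intros <- <-; exists e'; [eauto 10 |].
  destruct e' as [u w | p1 p2]; simpl in *.
  - rewrite (coarse_node_cls X X' (NV u) Hi I : coarse X (cls X' u) = cls X u),
      (coarse_node_cls X X' (NV w) Hi I : coarse X (cls X' w) = cls X w). auto.
  - exfalso. destruct Hq as [[_ [_ [_ Hnf]]] _]. apply Hf. intro Hf'. apply Hnf.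
    revert Hf'. apply fin_edges_sub; intros; apply coarse_self; auto.
Qed.

Section CompatibleSequence.
Variable s : nat -> QPt V.
Hypothesis s_in : forall n, in_quot (Xn n) (s n).
Hypothesis s_compat : forall n m, (n <= m)%nat -> fbond (Xn n) (Xn m) (s m) = s n.

Lemma proj_pt_eventually_eq p : in_D p ->
  (exists N, forall n, (N <= n)%nat -> proj_pt (Xn n) p = s n) -> forall n, proj_pt (Xn n) p = s n.
Proof.
  intros Hp [N HN] n. rewrite <- (s_compat n (max n N)) by lia.
  rewrite <- HN by lia. symmetry; apply fbond_proj_pt; auto using Xn_incl with arith.
Qed.

Lemma proj_pt_surj_vertices : (forall n, exists c, s n = QVert c) ->
  exists p, in_D p /\ forall n, proj_pt (Xn n) p = s n.
Proof.
  intro Hv. destruct (choice _ Hv) as [c Hc].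
  destruct (node_of_compatible_classes c O) as [a [Ha Hac]].
  - intros m _. specialize (s_in m). rewrite Hc in s_in. exact s_in.
  - intros n m _ Hnm. specialize (s_compat n m Hnm). rewrite !Hc in s_compat.
    injection s_compat; auto.
  - exists (node_pt a). split; [destruct a; simpl in *; auto |].
    intro n. rewrite proj_node_pt, Hc, Hac; auto with arith.
Qed.

Lemma inner_persists n0 e0 t m : s n0 = QInner e0 t -> (n0 <= m)%nat -> exists e, s m = QInner e t.
Proof.
  intros Hs0 Hm. pose proof (s_compat n0 m Hm) as Hc. rewrite Hs0 in Hc.
  destruct (fbond_inner_inv _ _ _ _ _ (Xn_incl n0 m Hm) (s_in m) Hc) as [e [He _]]. eauto.
Qed.

Section InnerPoints.
Variables (n0 : nat) (t : R) (e : nat -> QEdge V).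
Hypothesis s_inner : forall m, (n0 <= m)%nat -> s m = QInner (e m) t.

Lemma inner_is_qedge m : (n0 <= m)%nat -> is_qedge (Xn m) (e m).
Proof. intro Hm; specialize (s_in m); rewrite (s_inner m Hm) in s_in; apply s_in. Qed.

Lemma inner_param : 0 < t < 1.
Proof. specialize (s_in n0); rewrite (s_inner n0 (le_n _)) in s_in; apply s_in. Qed.

Lemma inner_bond n m : (n0 <= n)%nat -> (n <= m)%nat ->
  qtail (Xn n) (e n) = coarse (Xn n) (qtail (Xn m) (e m)) /\
  qhead (Xn n) (e n) = coarse (Xn n) (qhead (Xn m) (e m)) /\
  (e n = e m \/ exists p1 p2, e n = QEQ p1 p2).
Proof.
  intros H1 H2. pose proof (s_compat n m H2) as Hc. rewrite (s_inner n H1) in Hc.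
  destruct (fbond_inner_inv _ _ _ _ _ (Xn_incl n m H2) (s_in m) Hc) as [e' [Hm Hr]].
  rewrite (s_inner m ltac:(lia)) in Hm. injection Hm; intros <-; auto.
Qed.

Lemma proj_pt_surj_edge m u w : (n0 <= m)%nat -> e m = QED u w ->
  exists p, in_D p /\ forall n, proj_pt (Xn n) p = s n.
Proof.
  intros Hm Hem. pose proof (inner_is_qedge m Hm) as Hqm. rewrite Hem in Hqm. destruct Hqm as [Euw _].
  assert (HD : in_D (DInner (NV u) (NV w) t)) by (split; auto using inner_param).
  exists (DInner (NV u) (NV w) t). split; auto.
  apply proj_pt_eventually_eq; auto. exists m; intros n Hn.
  assert (Hen : e n = QED u w).
  { destruct (inner_bond m n Hm Hn) as [_ [_ [H | [p1 [p2 H]]]]]; congruence. }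
  rewrite (s_inner n ltac:(lia)), Hen. pose proof (inner_is_qedge n ltac:(lia)) as Hqn.
  rewrite Hen in Hqn. destruct Hqn as [_ [Hne Hf]]. apply proj_pt_QED; auto.
Qed.

Lemma proj_pt_surj_limit_edge : (forall m u w, (n0 <= m)%nat -> e m <> QED u w) ->
  exists p, in_D p /\ forall n, proj_pt (Xn n) p = s n.
Proof.
  intro Hnq.
  assert (HQ : forall m, (n0 <= m)%nat -> e m = QEQ (qtail (Xn m) (e m)) (qhead (Xn m) (e m))).
  { intros m Hm. destruct (e m) as [u w | p1 p2] eqn:Hem; simpl; auto. exfalso; eapply Hnq; eauto. }
  assert (Hq : forall m, (n0 <= m)%nat -> is_class (Xn m) (qtail (Xn m) (e m)) /\
      is_class (Xn m) (qhead (Xn m) (e m)) /\ qtail (Xn m) (e m) <> qhead (Xn m) (e m) /\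
      ~ fin_edges (qtail (Xn m) (e m)) (qhead (Xn m) (e m))).
  { intros m Hm. pose proof (inner_is_qedge m Hm) as H. rewrite (HQ m Hm) in H. exact H. }
  destruct (node_of_compatible_classes (fun m => qtail (Xn m) (e m)) n0) as [a [Ha Hac]];
    [apply Hq | intros; symmetry; apply inner_bond; auto |].
  destruct (node_of_compatible_classes (fun m => qhead (Xn m) (e m)) n0) as [b [Hb Hbc]];
    [apply Hq | intros; symmetry; apply inner_bond; auto |].
  assert (Hedge : is_edge a b).
  { apply (is_edge_of_not_fin_edges a b n0); auto;
      [intros m Hm |]; rewrite ?Hac, ?Hbc; auto; apply Hq; auto. }
  assert (HD : in_D (DInner a b t)) by (split; auto using inner_param).
  exists (DInner a b t). split; auto. apply proj_pt_eventually_eq; auto. exists n0; intros n Hn.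
  destruct (Hq n Hn) as [_ [_ [H1 H2]]].
  rewrite proj_pt_QEQ, (s_inner n Hn), (HQ n Hn), Hac, Hbc; auto; rewrite Hac, Hbc; auto.
Qed.

End InnerPoints.

Lemma proj_pt_surj : exists p, in_D p /\ forall n, proj_pt (Xn n) p = s n.
Proof.
  destruct (classic (exists n0 e t, s n0 = QInner e t)) as [[n0 [e0 [t Hs0]]] | Hno].
  - destruct (choice (fun m e => (n0 <= m)%nat -> s m = QInner e t)) as [e He].
    { intro m. destruct (Nat.le_gt_cases n0 m) as [Hm | Hm]; [| exists e0; lia].
      destruct (inner_persists n0 e0 t m Hs0 Hm) as [e He]; eauto. }
    destruct (classic (exists m u w, (n0 <= m)%nat /\ e m = QED u w)) as [[m [u [w [Hm Hem]]]] | Hnq].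
    + exact (proj_pt_surj_edge n0 t e He m u w Hm Hem).
    + apply (proj_pt_surj_limit_edge n0 t e He). intros m u w Hm Hem; apply Hnq; exists m, u, w; auto.
  - apply proj_pt_surj_vertices. intro n.
    destruct (s n) as [c | e t] eqn:Hsn; eauto. exfalso; eauto.
Qed.

End CompatibleSequence.
End InverseLimit.

(** * The topology of the quotients *)

Local Notation qpt := (Defs.qpt V E).
Local Notation quot_open := (Defs.quot_open V E).
Local Notation qspace := (Defs.qspace V E).

Lemma qpt_tail X e : qpt X e 0 = QVert (qtail X e).
Proof. unfold Defs.qpt; destruct (Req_EM_T 0 0); [auto | contradiction]. Qed.

Lemma qpt_head X e : qpt X e 1 = QVert (qhead X e).
Proof.
  unfold Defs.qpt; destruct (Req_EM_T 1 0); [lra |]. destruct (Req_EM_T 1 1); [auto | contradiction].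
Qed.

Lemma qpt_inner X e s : 0 < s < 1 -> qpt X e s = QInner e s.
Proof.
  intro H; unfold Defs.qpt; destruct (Req_EM_T s 0); [lra |]. destruct (Req_EM_T s 1); [lra | auto].
Qed.

Lemma qpt_in_quot X e s : is_qedge X e -> 0 <= s <= 1 -> in_quot X (qpt X e s).
Proof.
  intros He Hs. unfold Defs.qpt; destruct (Req_EM_T s 0); [| destruct (Req_EM_T s 1)].
  - destruct e; simpl in *; [exists u | apply He]; auto.
  - destruct e; simpl in *; [exists w | apply He]; auto.
  - simpl; split; auto; lra.
Qed.

Definition raw_set X (U : qspace X -> Prop) (q : QPt V) : Prop :=
  exists h : in_quot X q, U (exist _ q h).

Lemma raw_set_iff X U q (h : in_quot X q) : U (exist _ q h) <-> raw_set X U q.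
Proof.
  split; [intro H; exists h; auto |].
  intros [h' H]. replace h with h' by apply proof_irrelevance. auto.
Qed.

Lemma quot_open_of_raw X (U : QPt V -> Prop) :
  (forall e, is_qedge X e -> forall t, 0 <= t <= 1 -> U (qpt X e t) ->
     exists d, 0 < d /\ forall s, 0 <= s <= 1 -> Rabs (s - t) < d -> U (qpt X e s)) ->
  quot_open X (fun q => U (proj1_sig q)).
Proof.
  intros H e He t Ht [h Hu]. simpl in Hu.
  destruct (H e He t Ht Hu) as [d [Hd Hs]]. exists d; split; auto.
  intros s Hs1 Hs2. exists (qpt_in_quot X e s He Hs1). simpl. auto.
Qed.

Lemma unit_interval_cases t : 0 <= t <= 1 -> t = 0 \/ t = 1 \/ 0 < t < 1.
Proof. intro H; destruct (Req_EM_T t 0); auto. destruct (Req_EM_T t 1); auto. right; right; lra. Qed.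

Lemma Rabs_lt_between x y d : Rabs (x - y) < d -> y - d < x < y + d.
Proof. intro H; apply Rabs_def2 in H; lra. Qed.

Lemma quot_open_edge_ends X U c e : quot_open X U -> raw_set X U (QVert c) -> is_qedge X e ->
  exists d, 0 < d /\
    (qtail X e = c -> forall s, 0 < s < d -> raw_set X U (QInner e s)) /\
    (qhead X e = c -> forall s, 1 - d < s < 1 -> raw_set X U (QInner e s)).
Proof.
  intros HU Hc He.
  assert (A : exists d0, 0 < d0 /\ (qtail X e = c -> forall s, 0 < s < d0 -> raw_set X U (QInner e s))).
  { destruct (classic (qtail X e = c)) as [Ht | Ht]; [| exists 1; split; [lra | contradiction]].
    destruct (HU e He 0 ltac:(lra)) as [d [Hd Hs]]; [rewrite qpt_tail, Ht; exact Hc |].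
    exists (Rmin d 1); split; [apply Rmin_pos; lra |].
    intros _ s Hs1. pose proof (Rmin_l d 1); pose proof (Rmin_r d 1).
    rewrite <- (qpt_inner X e s) by lra. apply Hs; [lra | rewrite Rminus_0_r, Rabs_right; lra]. }
  assert (B : exists d1, 0 < d1 /\ (qhead X e = c -> forall s, 1 - d1 < s < 1 -> raw_set X U (QInner e s))).
  { destruct (classic (qhead X e = c)) as [Ht | Ht]; [| exists 1; split; [lra | contradiction]].
    destruct (HU e He 1 ltac:(lra)) as [d [Hd Hs]]; [rewrite qpt_head, Ht; exact Hc |].
    exists (Rmin d 1); split; [apply Rmin_pos; lra |].
    intros _ s Hs1. pose proof (Rmin_l d 1); pose proof (Rmin_r d 1).
    rewrite <- (qpt_inner X e s) by lra. apply Hs; [lra | rewrite Rabs_left; lra]. }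
  destruct A as [d0 [Hd0 A]]; destruct B as [d1 [Hd1 B]].
  exists (Rmin d0 d1). pose proof (Rmin_l d0 d1); pose proof (Rmin_r d0 d1).
  split; [apply Rmin_pos; lra |].
  split; intros Ht s Hs; [apply A | apply B]; auto; lra.
Qed.

Section Solid.
Hypothesis D_solid : solid V E.

(* Solidity makes [P_X] finite, and between two classes there is either one quotient edge or
   finitely many edges of [D]. *)
Lemma qedges_finite X : exists L, forall e, is_qedge X e -> In e L.
Proof.
  destruct (D_solid X) as [reps Hreps].
  set (CL := map (cls X) (reps ++ X)).
  assert (HCL : forall p, is_class X p -> In p CL).
  { intros p [u ->]. unfold CL. destruct (classic (In u X)) as [Hu | Hu].
    - apply in_map, in_or_app; auto.
    - destruct (Hreps u Hu) as [r [Hr Hs]].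
      replace (cls X u) with (cls X r); [apply in_map, in_or_app; auto |].
      symmetry; apply cls_of_mem. right; split; auto. apply (sc_notin _ _ _ Hs). }
  destruct (choice (fun pr l => fin_edges (fst pr) (snd pr) ->
                      forall u w, fst pr u -> snd pr w -> E u w -> In (u, w) l)) as [fl Hfl].
  { intros [p1 p2]. destruct (classic (fin_edges p1 p2)) as [[l Hl] | Hn]; [exists l | exists nil]; auto.
    intro; contradiction. }
  exists (flat_map (fun pr => QEQ (fst pr) (snd pr) :: map (fun uw => QED (fst uw) (snd uw)) (fl pr))
            (list_prod CL CL)).
  intros e He. apply in_flat_map.
  destruct e as [u w | p1 p2]; simpl in He.
  - destruct He as [Euw [Hne Hf]]. exists (cls X u, cls X w). split.
    + apply in_prod; apply HCL; [exists u | exists w]; auto.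
    + right; simpl. apply (in_map (fun uw => QED (fst uw) (snd uw)) _ (u, w)).
      apply (Hfl (cls X u, cls X w)); simpl; auto using cls_refl.
  - destruct He as [H1 [H2 _]]. exists (p1, p2); split; [apply in_prod; auto | left; auto].
Qed.

Lemma quot_open_vertex_nbhd X U c : quot_open X U -> raw_set X U (QVert c) ->
  exists eps, 0 < eps /\ forall e, is_qedge X e ->
    (qtail X e = c -> forall s, 0 < s < eps -> raw_set X U (QInner e s)) /\
    (qhead X e = c -> forall s, 1 - eps < s < 1 -> raw_set X U (QInner e s)).
Proof.
  intros HU Hc. destruct (qedges_finite X) as [L HL].
  assert (Hgen : forall L, exists eps, 0 < eps /\ forall e, In e L -> is_qedge X e ->
    (qtail X e = c -> forall s, 0 < s < eps -> raw_set X U (QInner e s)) /\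
    (qhead X e = c -> forall s, 1 - eps < s < 1 -> raw_set X U (QInner e s))).
  { clear L HL. induction L as [|e L [eps1 [He1 IH]]]; [exists 1; split; [lra | intros e []] |].
    destruct (classic (is_qedge X e)) as [Hq | Hq].
    - destruct (quot_open_edge_ends X U c e HU Hc Hq) as [d [Hd [A B]]].
      exists (Rmin eps1 d). pose proof (Rmin_l eps1 d); pose proof (Rmin_r eps1 d).
      split; [apply Rmin_pos; lra |].
      intros e' [<- | He'] Hq'.
      + split; intros Ht s Hs; [apply A | apply B]; auto; lra.
      + destruct (IH e' He' Hq') as [A' B']. split; intros Ht s Hs; [apply A' | apply B']; auto; lra.
    - exists eps1; split; auto. intros e' [<- | He'] Hq'; [contradiction | auto]. }
  destruct (Hgen L) as [eps [Heps H]]. exists eps; split; auto.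
Qed.

(* The quotient counterpart of [Chat_set]. *)
Definition class_nbhd X (P : (V -> Prop) -> Prop) eps (q : QPt V) : Prop :=
  match q with
  | QVert c => P c
  | QInner e t => (P (qtail X e) /\ P (qhead X e)) \/
                  (P (qtail X e) /\ ~ P (qhead X e) /\ t < eps) \/
                  (~ P (qtail X e) /\ P (qhead X e) /\ 1 - eps < t)
  end.

Lemma class_nbhd_open X P eps : 0 < eps -> quot_open X (fun q => class_nbhd X P eps (proj1_sig q)).
Proof.
  intro Heps. apply quot_open_of_raw. intros e He t Ht Hu.
  destruct (unit_interval_cases t Ht) as [-> | [-> | Hti]].
  - rewrite qpt_tail in Hu; simpl in Hu.
    destruct (classic (P (qhead X e))) as [Hh | Hh].
    + exists 1; split; [lra |]. intros s Hs _.
      destruct (unit_interval_cases s Hs) as [-> | [-> | Hsi]];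
        [rewrite qpt_tail | rewrite qpt_head | rewrite qpt_inner]; simpl; auto.
    + exists (Rmin eps 1); split; [apply Rmin_pos; lra |].
      pose proof (Rmin_l eps 1); pose proof (Rmin_r eps 1).
      intros s Hs Habs. apply Rabs_lt_between in Habs.
      destruct (unit_interval_cases s Hs) as [-> | [-> | Hsi]];
        [rewrite qpt_tail; auto | lra | rewrite qpt_inner; auto].
      simpl. right; left; repeat split; auto; lra.
  - rewrite qpt_head in Hu; simpl in Hu.
    destruct (classic (P (qtail X e))) as [Hh | Hh].
    + exists 1; split; [lra |]. intros s Hs _.
      destruct (unit_interval_cases s Hs) as [-> | [-> | Hsi]];
        [rewrite qpt_tail | rewrite qpt_head | rewrite qpt_inner]; simpl; auto.
    + exists (Rmin eps 1); split; [apply Rmin_pos; lra |].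
      pose proof (Rmin_l eps 1); pose proof (Rmin_r eps 1).
      intros s Hs Habs. apply Rabs_lt_between in Habs.
      destruct (unit_interval_cases s Hs) as [-> | [-> | Hsi]];
        [lra | rewrite qpt_head; auto | rewrite qpt_inner; auto].
      simpl. right; right; repeat split; auto; lra.
  - rewrite qpt_inner in Hu; auto; simpl in Hu.
    assert (Hm : 0 < Rmin t (1 - t)) by (apply Rmin_pos; lra).
    pose proof (Rmin_l t (1 - t)); pose proof (Rmin_r t (1 - t)).
    destruct Hu as [Hu | [[H1 [H2 H3]] | [H1 [H2 H3]]]].
    + exists (Rmin t (1 - t)); split; auto. intros s Hs Habs. apply Rabs_lt_between in Habs.
      rewrite qpt_inner by lra. simpl; auto.
    + exists (Rmin (Rmin t (1 - t)) (eps - t)); split; [apply Rmin_pos; lra |].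
      pose proof (Rmin_l (Rmin t (1 - t)) (eps - t)); pose proof (Rmin_r (Rmin t (1 - t)) (eps - t)).
      intros s Hs Habs. apply Rabs_lt_between in Habs.
      rewrite qpt_inner by lra. simpl. right; left; repeat split; auto; lra.
    + exists (Rmin (Rmin t (1 - t)) (t - (1 - eps))); split; [apply Rmin_pos; lra |].
      pose proof (Rmin_l (Rmin t (1 - t)) (t - (1 - eps))).
      pose proof (Rmin_r (Rmin t (1 - t)) (t - (1 - eps))).
      intros s Hs Habs. apply Rabs_lt_between in Habs.
      rewrite qpt_inner by lra. simpl. right; right; repeat split; auto; lra.
Qed.

Definition qinterval u w lo hi (q : QPt V) : Prop :=
  exists s, q = QInner (QED u w) s /\ lo < s < hi.

Lemma qinterval_open X u w lo hi : 0 <= lo -> hi <= 1 ->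
  quot_open X (fun q => qinterval u w lo hi (proj1_sig q)).
Proof.
  intros Hlo Hhi. apply quot_open_of_raw. intros e He t Ht [s [Hq Hs]].
  destruct (unit_interval_cases t Ht) as [-> | [-> | Hti]];
    [rewrite qpt_tail in Hq; discriminate | rewrite qpt_head in Hq; discriminate |].
  rewrite qpt_inner in Hq; auto. injection Hq; intros -> ->.
  exists (Rmin (s - lo) (hi - s)); split; [apply Rmin_pos; lra |].
  pose proof (Rmin_l (s - lo) (hi - s)); pose proof (Rmin_r (s - lo) (hi - s)).
  intros s' Hs' Habs. apply Rabs_lt_between in Habs.
  rewrite qpt_inner by lra. exists s'; split; auto; lra.
Qed.

Definition qbundle X (P1 P2 : (V -> Prop) -> Prop) t0 eps (q : QPt V) : Prop :=
  exists e s, q = QInner e s /\ P1 (qtail X e) /\ P2 (qhead X e) /\ 0 < s < 1 /\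
              Rabs (s - t0) < eps.

Lemma qbundle_open X P1 P2 t0 eps : quot_open X (fun q => qbundle X P1 P2 t0 eps (proj1_sig q)).
Proof.
  apply quot_open_of_raw. intros e He t Ht [e' [s [Hq [H1 [H2 [Hs Habs]]]]]].
  destruct (unit_interval_cases t Ht) as [-> | [-> | Hti]];
    [rewrite qpt_tail in Hq; discriminate | rewrite qpt_head in Hq; discriminate |].
  rewrite qpt_inner in Hq; auto. injection Hq; intros <- <-.
  pose proof (Rmin_l (Rmin t (1 - t)) (eps - Rabs (t - t0))).
  pose proof (Rmin_r (Rmin t (1 - t)) (eps - Rabs (t - t0))).
  pose proof (Rmin_l t (1 - t)); pose proof (Rmin_r t (1 - t)).
  exists (Rmin (Rmin t (1 - t)) (eps - Rabs (t - t0))); split; [apply Rmin_pos; [apply Rmin_pos |]; lra |].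
  set (d := Rmin (Rmin t (1 - t)) (eps - Rabs (t - t0))) in *.
  intros s' Hs' Habs'.
  assert (Htri : Rabs (s' - t0) <= Rabs (s' - t) + Rabs (t - t0)).
  { replace (s' - t0) with ((s' - t) + (t - t0)) by ring. apply Rabs_triang. }
  apply Rabs_lt_between in Habs' as Hb.
  rewrite qpt_inner by lra. exists e, s'; repeat split; auto; lra.
Qed.

(** * Basic open sets of |D| as preimages *)

(* The common shape of [star_set] and [Chat_set]. *)
Definition node_nbhd (Q : node -> Prop) eps (p : DPt V) : Prop :=
  match p with
  | DV y => Q (NV y)
  | DEnd h => Q (NE h)
  | DInner a b t => (Q a /\ Q b) \/ (Q a /\ ~ Q b /\ t < eps) \/ (~ Q a /\ Q b /\ 1 - eps < t)
  end.

Lemma node_nbhd_proj_iff X Q P eps p : (forall a, is_node a -> (Q a <-> P (node_cls X a))) ->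
  in_D p -> (node_nbhd Q eps p <-> class_nbhd X P eps (proj_pt X p)).
Proof.
  intros HQ Hp. destruct p as [y|h|a b t]; [apply (HQ (NV y)) | apply (HQ (NE h)) |]; simpl; auto.
  destruct Hp as [He Ht]. destruct (is_edge_nodes _ _ He) as [Ha [Hb _]].
  fold (proj_pt X (DInner a b t)).
  destruct (classic (node_cls X a = node_cls X b)) as [Hs | Hd].
  - rewrite proj_pt_same; auto. simpl. rewrite (HQ a Ha), (HQ b Hb), <- Hs. tauto.
  - destruct (proj_pt_diff X a b t He Hd) as [e [-> [T1 [T2 _]]]]. simpl.
    rewrite (HQ a Ha), (HQ b Hb), T1, T2. tauto.
Qed.

Lemma star_set_node_nbhd v eps p : in_D p ->
  (star_set V v eps p <-> node_nbhd (fun a => a = NV v) eps p).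
Proof.
  intro Hp. unfold star_set. destruct p as [y|h|a b t]; simpl.
  - split; [intros [H | [a [b [t [H _]]]]]; [injection H; intros ->; auto | discriminate] |].
    intro H; injection H; intros ->; auto.
  - split; [intros [H | [a [b [t [H _]]]]] | intro]; discriminate.
  - destruct Hp as [He Ht]. destruct (is_edge_nodes _ _ He) as [_ [_ Hne]]. split.
    + intros [H | [a' [b' [t' [H H']]]]]; [discriminate |]. injection H; intros -> -> ->.
      destruct (classic (a' = NV v)); destruct (classic (b' = NV v)); subst; tauto.
    + intros [[-> ->] | [[-> [_ H]] | [_ [-> H]]]]; [tauto | |]; right; eauto 10.
Qed.

Lemma Chat_set_node_nbhd X w eps p :
  Chat_set V E X w eps p <-> node_nbhd (node_in X (C_of X w)) eps p.
Proof. destruct p; simpl; tauto. Qed.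

Lemma interval_set_proj_iff X u w lo hi p : In u X -> In w X -> E u w -> in_D p ->
  (interval_set V u w lo hi p <-> qinterval u w lo hi (proj_pt X p)).
Proof.
  intros Hu Hw Euw Hp. unfold interval_set, qinterval. destruct p as [y|h|a b t];
    [split; intros [s [H _]]; discriminate | split; intros [s [H _]]; discriminate |].
  split.
  - intros [s [H Hs]]. injection H; intros -> -> ->. exists s; split; auto.
    apply proj_pt_QED.
    + intro H'. assert (Hw' := cls_refl X w). rewrite <- H' in Hw'.
      apply cls_singleton in Hw'; auto. subst; apply (E_irrefl _ Euw).
    + exists ((u, w) :: nil). intros x z Hx Hz _.
      apply cls_singleton in Hx; auto. apply cls_singleton in Hz; auto. subst; left; auto.
  - intros [s [H Hs]]. simpl in H.
    destruct (decide _); [discriminate |]. destruct (decide _); [injection H; intros; discriminate |].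
    destruct a as [a|a]; destruct b as [b|b]; simpl in H; injection H; intros; try discriminate.
    subst. exists s; split; auto.
Qed.

Lemma bundle_set_proj_iff X Q1 Q2 P1 P2 t0 eps p :
  (forall a, is_node a -> (Q1 a <-> P1 (node_cls X a))) ->
  (forall a, is_node a -> (Q2 a <-> P2 (node_cls X a))) ->
  (forall a, is_node a -> ~ (P1 (node_cls X a) /\ P2 (node_cls X a))) -> in_D p ->
  (bundle_set V Q1 Q2 t0 eps p <-> qbundle X P1 P2 t0 eps (proj_pt X p)).
Proof.
  intros HQ1 HQ2 Hdis Hp. unfold bundle_set, qbundle. destruct p as [y|h|a b t];
    [split; [intros [a [b [t [H _]]]] | intros [e [s [H _]]]]; discriminate
    |split; [intros [a [b [t [H _]]]] | intros [e [s [H _]]]]; discriminate |].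
  destruct Hp as [He Ht]. destruct (is_edge_nodes _ _ He) as [Ha [Hb _]].
  fold (proj_pt X (DInner a b t)).
  destruct (classic (node_cls X a = node_cls X b)) as [Hs | Hd].
  - rewrite proj_pt_same; auto. split; [| intros [e [s [H _]]]; discriminate].
    intros [a' [b' [t' [H [H1 [H2 _]]]]]]. injection H; intros <- <- <-.
    exfalso; apply (Hdis a Ha). rewrite <- (HQ1 a Ha), Hs, <- (HQ2 b Hb). auto.
  - destruct (proj_pt_diff X a b t He Hd) as [e [-> [T1 [T2 _]]]]. split.
    + intros [a' [b' [t' [H [H1 [H2 H3]]]]]]. injection H; intros <- <- <-.
      exists e, t; rewrite T1, T2, <- (HQ1 a Ha), <- (HQ2 b Hb); auto.
    + intros [e' [s [H [H1 [H2 H3]]]]]. injection H; intros <- <-.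
      exists a, b, t; rewrite (HQ1 a Ha), (HQ2 b Hb), <- T1, <- T2; auto.
Qed.

Local Notation Dspace := (Defs.Dspace V E).
Local Notation D_basic := (Defs.D_basic V E).
Local Notation D_open := (Defs.D_open V E).

Lemma bundle_set_same_classes X X' (Q1 Q2 : node -> Prop) a b t delta : incl X X' ->
  (forall a', is_node a' -> Q1 a' -> node_cls X' a' = node_cls X' a) ->
  (forall b', is_node b' -> Q2 b' -> node_cls X' b' = node_cls X' b) ->
  is_node a -> is_node b -> forall q, in_D q -> bundle_set V Q1 Q2 t delta q ->
  exists a' b' s, q = DInner a' b' s /\ node_cls X a' = node_cls X a /\
    node_cls X b' = node_cls X b /\ 0 < s < 1 /\ Rabs (s - t) < delta.
Proof.
  intros Hi HQ1 HQ2 Ha Hb q Hq [a' [b' [s [-> [Q1a [Q2b [Hs Habs]]]]]]].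
  destruct Hq as [He' _]. destruct (is_edge_nodes _ _ He') as [Ha' [Hb' _]].
  exists a', b', s; split; [reflexivity | split; [| split]]; auto;
    apply (node_cls_eq_incl X X'); auto.
Qed.

Lemma node_in_own_component X w : is_end w -> node_in X (C_of X w) (NE w).
Proof. split; [auto | tauto]. Qed.

Lemma node_in_component X w a : is_end w -> is_node a ->
  node_in X (C_of X w) a -> node_cls X a = node_cls X (NE w).
Proof. intros Hw Ha H. apply node_in_iff; auto. apply (node_cls_class X (NE w)); auto. Qed.

Lemma limit_edge_bundle X a b t delta : is_edge a b -> ~ (exists u w, a = NV u /\ b = NV w) ->
  0 < t < 1 -> 0 < delta ->
  exists S, D_basic S /\ S (DInner a b t) /\ forall q, in_D q -> S q ->
    exists a' b' s, q = DInner a' b' s /\ node_cls X a' = node_cls X a /\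
      node_cls X b' = node_cls X b /\ 0 < s < 1 /\ Rabs (s - t) < delta.
Proof.
  intros He Hnv Ht Hd. destruct (is_edge_nodes _ _ He) as [Ha [Hb Hne]].
  assert (H0 : Rabs (t - t) < delta) by (rewrite Rminus_diag, Rabs_R0; auto).
  destruct a as [v|w]; destruct b as [v'|h]; [exfalso; eauto | | |].
  - set (X' := v :: X). assert (Hi : incl X X') by (intros y Hy; right; auto).
    exists (bundle_set V (fun a => a = NV v) (node_in X' (C_of X' h)) t delta). split; [| split].
    + do 4 right; left. exists v, h, X', t, delta.
      exact (conj He (conj (or_introl eq_refl) (conj Ht (conj Hd eq_refl)))).
    + exists (NV v), (NE h), t. auto using node_in_own_component.
    + apply (bundle_set_same_classes X X'); auto; [intros a' _ ->; auto |].
      intros b' Hb'; apply node_in_component; auto.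
  - set (X' := v' :: X). assert (Hi : incl X X') by (intros y Hy; right; auto).
    exists (bundle_set V (node_in X' (C_of X' w)) (fun a => a = NV v') t delta). split; [| split].
    + do 5 right. exists w, v', X', t, delta.
      exact (conj He (conj (or_introl eq_refl) (conj Ht (conj Hd eq_refl)))).
    + exists (NE w), (NV v'), t. auto using node_in_own_component.
    + apply (bundle_set_same_classes X X'); auto; [| intros b' _ ->; auto].
      intros a' Ha'; apply node_in_component; auto.
  - destruct (ends_separated w h Ha Hb ltac:(congruence)) as [X0 HX0].
    set (X' := X0 ++ X). assert (Hi : incl X X') by (intros y Hy; apply in_or_app; auto).
    assert (Hsep : separates X' w h).
    { apply separates_iff, (node_cls_neq_incl X0 X' (NE w) (NE h)); auto.
      - intros y Hy; apply in_or_app; auto.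
      - apply separates_iff; auto. }
    exists (bundle_set V (node_in X' (C_of X' w)) (node_in X' (C_of X' h)) t delta).
    split; [| split].
    + do 3 right; left. exists w, h, X', t, delta.
      exact (conj He (conj Hsep (conj Ht (conj Hd eq_refl)))).
    + exists (NE w), (NE h), t. auto 6 using node_in_own_component.
    + apply (bundle_set_same_classes X X'); auto; intros c Hc; apply node_in_component; auto.
Qed.

Lemma node_nbhd_proj_in X U c eps (Q : node -> Prop) :
  (forall a, is_node a -> Q a -> node_cls X a = c) -> raw_set X U (QVert c) ->
  (forall e, is_qedge X e ->
    (qtail X e = c -> forall s, 0 < s < eps -> raw_set X U (QInner e s)) /\
    (qhead X e = c -> forall s, 1 - eps < s < 1 -> raw_set X U (QInner e s))) ->
  forall p, in_D p -> node_nbhd Q eps p -> raw_set X U (proj_pt X p).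
Proof.
  intros HQ Hc Heps p Hp Hn.
  destruct (in_D_cases p Hp) as [[a [Ha ->]] | [a [b [t [-> [He Ht]]]]]].
  - rewrite proj_node_pt, (HQ a Ha); auto. destruct a; exact Hn.
  - destruct (is_edge_nodes _ _ He) as [Ha [Hb _]].
    destruct (classic (node_cls X a = node_cls X b)) as [Hs | Hd].
    + rewrite proj_pt_same; auto.
      destruct Hn as [[Qa _] | [[Qa _] | [_ [Qb _]]]]; [rewrite (HQ a Ha Qa) | rewrite (HQ a Ha Qa) |
        rewrite Hs, (HQ b Hb Qb)]; auto.
    + destruct (proj_pt_diff X a b t He Hd) as [e [-> [T1 [T2 Hq]]]].
      destruct (Heps e Hq) as [A B].
      destruct Hn as [[Qa Qb] | [[Qa [_ H]] | [_ [Qb H]]]].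
      * exfalso; apply Hd; rewrite (HQ a Ha Qa), (HQ b Hb Qb); auto.
      * apply A; [rewrite T1; auto | lra].
      * apply B; [rewrite T2; auto | lra].
Qed.

Lemma proj_open_along_edge X U a b t : quot_open X U -> is_edge a b -> 0 < t < 1 ->
  raw_set X U (proj_pt X (DInner a b t)) -> exists delta, 0 < delta /\
    forall s, 0 < s < 1 -> Rabs (s - t) < delta -> raw_set X U (proj_pt X (DInner a b s)).
Proof.
  intros HU He Ht Hx.
  destruct (classic (node_cls X a = node_cls X b)) as [Hs | Hd].
  - exists 1; split; [lra |]. intros s _ _. rewrite proj_pt_same in Hx |- *; auto.
  - destruct (proj_pt_diff X a b t He Hd) as [e [He2 [_ [_ Hq]]]].
    rewrite He2, <- (qpt_inner X e t Ht) in Hx.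
    destruct (HU e Hq t ltac:(lra) Hx) as [d [Hd0 Hs]].
    exists d; split; auto. intros s Hs1 Hs2.
    rewrite (proj_pt_retime X a b t s), He2. simpl. rewrite <- (qpt_inner X e s Hs1).
    apply Hs; auto; lra.
Qed.

Lemma proj_preimage_nbhd_node X U a : quot_open X U -> is_node a ->
  raw_set X U (proj_pt X (node_pt a)) ->
  exists S, D_basic S /\ S (node_pt a) /\ forall q, in_D q -> S q -> raw_set X U (proj_pt X q).
Proof.
  intros HU Ha Hx. rewrite proj_node_pt in Hx.
  destruct (quot_open_vertex_nbhd X U _ HU Hx) as [eps [Heps Hev]].
  destruct a as [v|w].
  - exists (star_set V v eps). split; [left; exists v, eps; auto | split; [left; auto |]].
    intros q Hq Hy. apply star_set_node_nbhd in Hy; auto.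
    apply (node_nbhd_proj_in X U (node_cls X (NV v)) eps (fun a => a = NV v)); auto.
    intros a _ ->; auto.
  - exists (Chat_set V E X w eps). split; [do 2 right; left; exists X, w, eps; auto |].
    split; [apply (node_in_own_component X w Ha) |].
    intros q Hq Hy. apply Chat_set_node_nbhd in Hy.
    apply (node_nbhd_proj_in X U (node_cls X (NE w)) eps (node_in X (C_of X w))); auto.
    intros a Ha'; apply node_in_component; auto.
Qed.

Lemma proj_preimage_nbhd_inner X U a b t : quot_open X U -> is_edge a b -> 0 < t < 1 ->
  raw_set X U (proj_pt X (DInner a b t)) ->
  exists S, D_basic S /\ S (DInner a b t) /\ forall q, in_D q -> S q -> raw_set X U (proj_pt X q).
Proof.
  intros HU He Ht Hx.
  destruct (proj_open_along_edge X U a b t HU He Ht Hx) as [delta [Hdelta Hdel]].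
  destruct (classic (exists u w, a = NV u /\ b = NV w)) as [[u [w [-> ->]]] | Hnv].
  - set (lo := Rmax 0 (t - delta)). set (hi := Rmin 1 (t + delta)).
    assert (Hlo : 0 <= lo /\ t - delta <= lo /\ lo < t)
      by (repeat split; [apply Rmax_l | apply Rmax_r | apply Rmax_lub_lt; lra]).
    assert (Hhi : hi <= 1 /\ hi <= t + delta /\ t < hi)
      by (repeat split; [apply Rmin_l | apply Rmin_r | apply Rmin_glb_lt; lra]).
    exists (interval_set V u w lo hi). split; [| split].
    + right; left. exists u, w, lo, hi. repeat split; auto; lra.
    + exists t; split; auto; lra.
    + intros q Hq [s [-> Hs]]. apply Hdel; [lra | apply Rabs_def1; lra].
  - destruct (limit_edge_bundle X a b t delta He Hnv Ht Hdelta) as [S [HS [HSp HSq]]].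
    exists S; split; [| split]; auto.
    intros q Hq Hy. destruct (HSq q Hq Hy) as [a' [b' [s [-> [H1 [H2 [Hs Habs]]]]]]].
    rewrite (proj_pt_limit_edge_cong X a b a' b' s He Hnv H1 H2). auto.
Qed.

Definition proj_q X (p : Dspace) : qspace X :=
  exist _ (proj_pt X (proj1_sig p)) (proj_pt_in_quot X _ (proj2_sig p)).

Lemma D_open_of_nbhds (A : Dspace -> Prop) :
  (forall x, A x -> exists S, D_basic S /\ S (proj1_sig x) /\ forall y, S (proj1_sig y) -> A y) ->
  D_open A.
Proof.
  intro H. destruct (choice (fun (i : {x | A x}) S => D_basic S /\ S (proj1_sig (proj1_sig i)) /\
                               forall y, S (proj1_sig y) -> A y)) as [S HS].
  { intros [x Hx]; apply H; auto. }
  replace A with (fun x : Dspace => exists i : {x | A x}, S i (proj1_sig x)).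
  - apply gen_union. intro i. apply gen_base. exists (S i); split; auto. apply HS.
  - apply pred_ext; intro x; split; [intros [i Hi]; apply (HS i); auto |].
    intro Hx. exists (exist _ x Hx). apply (HS (exist _ x Hx)).
Qed.

Lemma proj_q_continuous X : continuous D_open (quot_open X) (proj_q X).
Proof.
  intros U HU. apply D_open_of_nbhds. intros [p Hp] Hx.
  unfold proj_q in Hx; simpl in Hx |- *. apply raw_set_iff in Hx.
  assert (HS : exists S, D_basic S /\ S p /\ forall q, in_D q -> S q -> raw_set X U (proj_pt X q)).
  { destruct (in_D_cases p Hp) as [[a [Ha ->]] | [a [b [t [-> [He Ht]]]]]];
      [apply proj_preimage_nbhd_node | apply proj_preimage_nbhd_inner]; auto. }
  destruct HS as [S [HS [HSp HSq]]]. exists S; repeat split; auto.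
  intros [q Hq] Hy. unfold proj_q; simpl in Hy |- *. apply raw_set_iff, HSq; auto.
Qed.

Definition quot_preimage (S : DPt V -> Prop) (X : list V) : Prop :=
  exists U : QPt V -> Prop, quot_open X (fun q => U (proj1_sig q)) /\
    forall p, in_D p -> (S p <-> U (proj_pt X p)).

Lemma bundle_set_quot_preimage X Q1 Q2 P1 P2 t0 eps :
  (forall a, is_node a -> (Q1 a <-> P1 (node_cls X a))) ->
  (forall a, is_node a -> (Q2 a <-> P2 (node_cls X a))) ->
  (forall a, is_node a -> ~ (Q1 a /\ Q2 a)) ->
  quot_preimage (bundle_set V Q1 Q2 t0 eps) X.
Proof.
  intros H1 H2 Hdis. exists (qbundle X P1 P2 t0 eps). split; [apply qbundle_open |].
  intros p Hp. apply bundle_set_proj_iff; auto.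
  intros a Ha. rewrite <- (H1 a Ha), <- (H2 a Ha). auto.
Qed.

Lemma basic_open_quot_preimage S : D_basic S ->
  exists X0, forall X, incl X0 X -> quot_preimage S X.
Proof.
  assert (Hstar : forall v X, In v X -> forall a, is_node a -> (a = NV v <-> node_cls X a = cls X v))
    by auto using star_node_iff.
  intros [[v [eps [Heps ->]]] | [[u [w [lo [hi [Euw [Hlo [Hlh [Hhi ->]]]]]]]] |
         [[X0 [w [eps [Hw [Heps ->]]]]] | [[w [h [X0 [t0 [eps [Hle [Hsep [Ht0 [Heps ->]]]]]]]]] |
         [[v [w [X0 [t0 [eps [Hle [Hv [Ht0 [Heps ->]]]]]]]]] |
          [w [v [X0 [t0 [eps [Hle [Hv [Ht0 [Heps ->]]]]]]]]]]]]]].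
  - exists (v :: nil); intros X Hi. exists (class_nbhd X (fun c => c = cls X v) eps).
    split; [apply class_nbhd_open; auto |]. intros p Hp.
    rewrite star_set_node_nbhd; auto. apply node_nbhd_proj_iff; auto. apply Hstar, Hi; left; auto.
  - exists (u :: w :: nil); intros X Hi. exists (qinterval u w lo hi).
    split; [apply qinterval_open; lra |].
    intros p Hp. apply interval_set_proj_iff; auto; apply Hi; simpl; auto.
  - exists X0; intros X Hi. exists (class_nbhd X (fun c => forall y, c y -> C_of X0 w y) eps).
    split; [apply class_nbhd_open; auto |]. intros p Hp.
    rewrite Chat_set_node_nbhd. apply node_nbhd_proj_iff; auto. intros; apply chat_node_iff; auto.
  - destruct Hle as [Hw [Hh _]]. exists X0; intros X Hi.
    apply bundle_set_quot_preimage with (fun c => forall y, c y -> C_of X0 w y)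
      (fun c => forall y, c y -> C_of X0 h y); intros a Ha; try (apply chat_node_iff; auto).
    intros [H1 H2]. apply separates_iff in Hsep. apply Hsep.
    rewrite <- (node_in_component X0 w a Hw Ha H1 : node_cls X0 a = C_of X0 w).
    exact (node_in_component X0 h a Hh Ha H2).
  - destruct Hle as [Hw _]. exists X0; intros X Hi.
    apply bundle_set_quot_preimage with (fun c => c = cls X v)
      (fun c => forall y, c y -> C_of X0 w y); intros a Ha;
      [apply (Hstar v X (Hi v Hv) a Ha) | apply chat_node_iff; auto |].
    intros [-> H2]. exact (C_of_notin X0 w v H2 Hv).
  - destruct Hle as [Hw _]. exists X0; intros X Hi.
    apply bundle_set_quot_preimage with (fun c => forall y, c y -> C_of X0 w y)
      (fun c => c = cls X v); intros a Ha;
      [apply chat_node_iff; auto | apply (Hstar v X (Hi v Hv) a Ha) |].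
    intros [H1 ->]. exact (C_of_notin X0 w v H1 Hv).
Qed.

Section Homeomorphism.
Variable enum : nat -> V.
Hypothesis enum_surj : forall v, exists n, enum n = v.

Local Notation Xn := (Defs.Xn V enum).
Local Notation limspace := (Defs.limspace V E enum).
Local Notation lim_open := (Defs.lim_open V E enum).

Definition to_lim (p : Dspace) : limspace.
Proof.
  unfold Defs.limspace. refine (exist _ (fun n => proj_q (Xn n) p) _).
  intros n m H. exact (fbond_proj_pt (Xn n) (Xn m) _ (Xn_incl enum n m H) (proj2_sig p)).
Defined.

Lemma limspace_ext (s s' : limspace) :
  (forall n, proj1_sig (proj1_sig s n) = proj1_sig (proj1_sig s' n)) -> s = s'.
Proof.
  destruct s as [s Hs]; destruct s' as [s' Hs']; simpl; intro H.
  assert (s = s') as <-; [| f_equal; apply proof_irrelevance].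
  apply functional_extensionality_dep; intro n. specialize (H n).
  destruct (s n) as [q h]; destruct (s' n) as [q' h']; simpl in H; subst.
  f_equal; apply proof_irrelevance.
Qed.

Lemma to_lim_inj p q : to_lim p = to_lim q -> p = q.
Proof.
  intro H. destruct p as [p Hp]; destruct q as [q Hq].
  assert (p = q) as <-; [| f_equal; apply proof_irrelevance].
  apply (proj_pt_inj enum enum_surj); auto. intro n.
  exact (f_equal (fun s : limspace => proj1_sig (proj1_sig s n)) H).
Qed.

Lemma to_lim_surj s : exists p, to_lim p = s.
Proof.
  destruct (proj_pt_surj enum enum_surj (fun n => proj1_sig (proj1_sig s n))) as [p [Hp Hs]].
  - intro n; apply (proj2_sig (proj1_sig s n)).
  - intros n m H; apply (proj2_sig s n m H).
  - exists (exist _ p Hp). apply limspace_ext; intro n; simpl; auto.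
Qed.

Definition of_lim (s : limspace) : Dspace :=
  epsilon (inhabits (exist _ (DV (enum O)) I : Dspace)) (fun p => to_lim p = s).

Lemma to_lim_of_lim s : to_lim (of_lim s) = s.
Proof. apply (epsilon_spec _ (fun p => to_lim p = s)), to_lim_surj. Qed.

Lemma of_lim_to_lim p : of_lim (to_lim p) = p.
Proof. apply to_lim_inj, to_lim_of_lim. Qed.

Lemma to_lim_continuous : continuous D_open lim_open to_lim.
Proof.
  intros W HW. induction HW as [S HS | | U W HU IHU HW IHW | I F HF IH].
  - destruct HS as [n [U [HU ->]]]. exact (proj_q_continuous (Xn n) U HU).
  - apply gen_full.
  - apply gen_inter; auto.
  - apply gen_union; auto.
Qed.

Lemma of_lim_basic_open S : D_basic S -> lim_open (fun s => S (proj1_sig (of_lim s))).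
Proof.
  intro HS. destruct (basic_open_quot_preimage S HS) as [X0 HX0].
  destruct (Xn_exhaust enum enum_surj X0) as [n Hn].
  destruct (HX0 (Xn n) Hn) as [U [HU Hiff]].
  replace (fun s => S (proj1_sig (of_lim s))) with
    (fun s : limspace => (fun q : qspace (Xn n) => U (proj1_sig q)) (proj1_sig s n)).
  - apply gen_base. exists n, (fun q => U (proj1_sig q)). split; auto.
  - apply pred_ext; intro s. rewrite Hiff by apply (proj2_sig (of_lim s)).
    assert (H := f_equal (fun s' : limspace => proj1_sig (proj1_sig s' n)) (to_lim_of_lim s)).
    simpl in H. rewrite H. tauto.
Qed.

Lemma of_lim_continuous : continuous lim_open D_open of_lim.
Proof.
  intros W HW. induction HW as [S HS | | U W HU IHU HW IHW | I F HF IH].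
  - destruct HS as [S' [HS' ->]]. apply of_lim_basic_open; auto.
  - apply gen_full.
  - apply gen_inter; auto.
  - apply gen_union; auto.
Qed.

End Homeomorphism.
End Solid.
End Irreflexive.
End Digraph.

Theorem corollary4p3 (V : Type) (E : V -> V -> Prop) (enum : nat -> V) :
  (forall v, ~ E v v) ->
  solid V E ->
  (forall v, exists n, enum n = v) ->
  homeomorphic (D_open V E) (lim_open V E enum).
Proof.
  intros E_irrefl D_solid enum_surj.
  exists (to_lim V E E_irrefl enum), (of_lim V E E_irrefl enum).
  split; [| split; [| split]].
  - apply of_lim_to_lim, enum_surj.
  - apply to_lim_of_lim, enum_surj.
  - apply to_lim_continuous, D_solid.
  - apply of_lim_continuous; auto.
Qed.
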